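(* Let $k\ge1$, $m\ge0$, $N_1=n-mk\ge0$, $N_2=m$, let $\eta_1\in\mathbb C$ with $\hbar=k\eta_1$, $t_1=e^{\eta_1/2}$, $q=e^{\hbar/2}=t_1^k$, and $t_n\in\mathbb C^*$. Let $S_0=\bigsqcup_{\ell=1}^{N_2}\{e_{N_1+k(\ell-1)+j}-e_{N_1+k(\ell-1)+j+1}:1\le j\le k-1\}$, so $\mathcal D_0=\{x: x_j-x_{j+1}=\eta_1$ whenever $e_j-e_{j+1}\in S_0\}$, with coordinates $x_1,\dots,x_{N_1}$ and $y_\ell=\frac1k\sum_{s=0}^{k-1}x_{N_1+k\ell-s}$. Then the restriction to $\mathcal D_0$ of $$M_{-e_1}=\sum_{i=1}^n\sum_{\epsilon=\pm1}\prod_{j\ne i}g(\epsilon x_i-x_j;t_1,1)g(\epsilon x_i+x_j;t_1,1)\,g(\epsilon x_i;t_n,1)\,\mathsf T^{-\epsilon\hbar}_{x_i}$$ is well defined and equals $$\overline{M_{-e_1}}=\sum_{i=1}^{N_1}\sum_{\epsilon=\pm1}A_i^\epsilon\,\mathsf T^{-\epsilon\hbar}_{x_i}+\frac{q-q^{-1}}{t_1-t_1^{-1}}\sum_{\ell=1}^{N_2}\sum_{\epsilon=\pm1}B_\ell^\epsilon\,\mathsf T^{-\epsilon\eta_1}_{y_\ell},$$ where $A_i^\epsilon=\prod_{j\le N_1,j\ne i}g(\epsilon x_i-x_j;t_1,1)g(\epsilon x_i+x_j;t_1,1)\prod_{\ell'=1}^{N_2}g(\epsilon x_i-y_{\ell'};q^{1/2}t_1^{1/2},q^{-1/2}t_1^{1/2})g(\epsilon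 x_i+y_{\ell'};q^{1/2}t_1^{1/2},q^{-1/2}t_1^{1/2})\,g(\epsilon x_i;t_n,1)$ and $B_\ell^\epsilon=\prod_{j=1}^{N_1}g(\epsilon y_\ell-x_j;q^{1/2}t_1^{1/2},q^{1/2}t_1^{-1/2})g(\epsilon y_\ell+x_j;q^{1/2}t_1^{1/2},q^{1/2}t_1^{-1/2})\prod_{\ell'\ne\ell}g(\epsilon y_\ell-y_{\ell'};q,1)g(\epsilon y_\ell+y_{\ell'};q,1)\,g(\epsilon y_\ell;q^{1/2}t_1^{-1/2}t_n,q^{1/2}t_1^{-1/2})\,g(2\epsilon y_\ell;qt_1^{-1},1)$.
   Context: $R=B_n$ in $V=\mathbb C^n$ with orthonormal basis $e_i$, coordinates $x_i=(e_i,x)$; simple roots $e_i-e_{i+1}$ ($i<n$), $e_n$. $g(z;a,b)=\frac{ae^z-a^{-1}}{be^z-b^{-1}}$. $\hbar\in\mathbb C\setminus\pi i\mathbb Q$. $\mathsf T^a_z$ is the shift $z\mapsto z+a$; on functions on $V$, $\mathsf T^{-\epsilon\hbar}_{x_i}=\tau(\epsilon e_i)$ where $(\tau(\lambda)f)(x)=f(x-\hbar\lambda)$. With $\overline V=\{x:(\alpha,x)=0\ \forall\alpha\in S_0\}$ and $\bar\lambda$ the orthogonal projection onto $\overline V$, the restriction of $D=\sum_\lambda g_\lambda\tau(\lambda)$ to $\mathcal D_0$ is $\overline D=\sum_{\lambda'}\big(\sum_{\bar\lambda=\lambda'}g_\lambda\big)\big|_{\mathcal D_0}\tau(\lambda')$,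 provided these restricted coefficients are well-defined meromorphic functions on $\mathcal D_0$ (then e.g. $\tau(\epsilon e_i)$ for $i$ in the $\ell$-th block restricts to $\mathsf T^{-\epsilon\eta_1}_{y_\ell}$). *)

From Stdlib Require Import Reals List Arith Lia ZArith Bool ClassicalDescription.
Import ListNotations.
Open Scope R_scope.

Definition CC := (R * R)%type.
Definition CofR (r : R) : CC := (r, 0).
Definition C0 : CC := (0, 0).
Definition C1 : CC := (1, 0).
Definition Ci : CC := (0, 1).
Definition Cadd (z w : CC) : CC := (fst z + fst w, snd z + snd w).
Definition Copp (z : CC) : CC := (- fst z, - snd z).
Definition Csub (z w : CC) : CC := Cadd z (Copp w).
Definition Cmul (z w : CC) : CC :=
  (fst z * fst w - snd z * snd w, fst z * snd w + snd z * fst w).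
Definition Cinv (z : CC) : CC :=
  (fst z / (fst z ^ 2 + snd z ^ 2), - snd z / (fst z ^ 2 + snd z ^ 2)).
Definition Cdiv (z w : CC) : CC := Cmul z (Cinv w).
Definition Cexp (z : CC) : CC := (exp (fst z) * cos (snd z), exp (fst z) * sin (snd z)).
Definition Cprod (l : list CC) : CC := fold_right Cmul C1 l.
Definition Csum (l : list CC) : CC := fold_right Cadd C0 l.
Definition Cnat (k : nat) : CC := CofR (INR k).

Definition not_in_piiQ (h : CC) : Prop :=
  ~ (exists (p r : Z), r <> 0%Z /\ Cmul h (CofR (IZR r)) = (0, PI * IZR p)).

Definition g (z a b : CC) : CC :=
  Cdiv (Csub (Cmul a (Cexp z)) (Cinv a)) (Csub (Cmul b (Cexp z)) (Cinv b)).
Definition gden (z b : CC) : CC := Csub (Cmul b (Cexp z)) (Cinv b).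

(** * Difference operators: finite formal sums  sum_t (coeff_t) tau(shift_t),
    each coefficient being a scalar times a product of g-factors (z,a,b).
    Shifts are vectors lambda in R^n (coordinates indexed 1..n);
    (tau(lambda) f)(x) = f(x - hbar lambda). *)
Record term := mkTerm { scal : CC; facs : list (CC * CC * CC); shift : nat -> R }.

Definition tval (t : term) : CC :=
  Cmul (scal t) (Cprod (map (fun f => match f with (z, a, b) => g z a b end) (facs t))).
Definition tdefined (t : term) : Prop :=
  Forall (fun f => match f with (z, a, b) => gden z b <> C0 end) (facs t).

(** * The sub-root-system S_0: blocks of size k after the first N1 coordinates.
    Block l (1 <= l <= m) is { N1+k(l-1)+1, ..., N1+k l }. *)
Definition in_block (N1 k l j : nat) : bool :=
  ((N1 + k * (l - 1) <? j) && (j <=? N1 + k * l))%nat.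

Definition inD0 (N1 k m : nat) (eta1 : CC) (x : nat -> CC) : Prop :=
  forall l j : nat, (1 <= l <= m)%nat -> (1 <= j <= k - 1)%nat ->
    Csub (x (N1 + k * (l - 1) + j)%nat) (x (N1 + k * (l - 1) + j + 1)%nat) = eta1.

Definition ycoord (N1 k : nat) (x : nat -> CC) (l : nat) : CC :=
  Cmul (CofR (/ INR k)) (Csum (map (fun s => x (N1 + k * l - s)%nat) (seq 0 k))).

(** Orthogonal projection of lambda in R^n onto Vbar = S_0-orthogonal
    (coordinates 1..N1 kept, each block replaced by its average). *)
Definition block_of (N1 k j : nat) : nat := ((j - N1 - 1) / k + 1)%nat.
Definition proj (N1 k n : nat) (v : nat -> R) : nat -> R :=
  fun j =>
    if ((1 <=? j) && (j <=? N1))%nat then v j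
    else if ((N1 <? j) && (j <=? n))%nat then
      / INR k * fold_right Rplus 0
        (map (fun s => v (N1 + k * (block_of N1 k j - 1) + 1 + s)%nat) (seq 0 k))
    else 0.

(** Restricted coefficient of tau(lambda') in the restriction to D_0:
    sum of the coefficients g_lambda with proj lambda = lambda', evaluated at x. *)
Definition restr_coef (N1 k n : nat) (D : list term) (lam : nat -> R) (x : nat -> CC) : CC :=
  Csum (map tval (filter (fun t =>
     if excluded_middle_informative (proj N1 k n (shift t) = lam) then true else false) D)).

Definition eshift (i : nat) (eps : R) : nat -> R := fun j => if (j =? i)%nat then eps else 0.

Definition M_op (n : nat) (t1 tn : CC) (x : nat -> CC) : list term :=
  flat_map (fun i => map (fun eps =>
     mkTerm C1
       (flat_map (fun j =>
          [(Csub (Cmul (CofR eps) (x i)) (x j), t1, C1);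
           (Cadd (Cmul (CofR eps) (x i)) (x j), t1, C1)])
          (filter (fun j => negb (j =? i)%nat) (seq 1 n))
        ++ [(Cmul (CofR eps) (x i), tn, C1)])
       (eshift i eps)) [1; -1]) (seq 1 n).

(** * The claimed restricted operator Mbar.
    sq = q^{1/2} = e^{hbar/4}, st1 = t1^{1/2} = e^{eta1/4}. *)
Definition Mbar_op (N1 k m n : nat) (q t1 sq st1 tn : CC) (x : nat -> CC) : list term :=
  let y := ycoord N1 k x in
  let c := Cdiv (Csub q (Cinv q)) (Csub t1 (Cinv t1)) in
  flat_map (fun i => map (fun eps =>
     mkTerm C1
       (flat_map (fun j =>
          [(Csub (Cmul (CofR eps) (x i)) (x j), t1, C1);
           (Cadd (Cmul (CofR eps) (x i)) (x j), t1, C1)])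
          (filter (fun j => negb (j =? i)%nat) (seq 1 N1))
        ++ flat_map (fun l' =>
          [(Csub (Cmul (CofR eps) (x i)) (y l'), Cmul sq st1, Cmul (Cinv sq) st1);
           (Cadd (Cmul (CofR eps) (x i)) (y l'), Cmul sq st1, Cmul (Cinv sq) st1)])
          (seq 1 m)
        ++ [(Cmul (CofR eps) (x i), tn, C1)])
       (eshift i eps)) [1; -1]) (seq 1 N1)
  ++
  flat_map (fun l => map (fun eps =>
     mkTerm c
       (flat_map (fun j =>
          [(Csub (Cmul (CofR eps) (y l)) (x j), Cmul sq st1, Cmul sq (Cinv st1));
           (Cadd (Cmul (CofR eps) (y l)) (x j), Cmul sq st1, Cmul sq (Cinv st1))])
          (seq 1 N1)
        ++ flat_map (fun l' =>
          [(Csub (Cmul (CofR eps) (y l)) (y l'), q, C1);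
           (Cadd (Cmul (CofR eps) (y l)) (y l'), q, C1)])
          (filter (fun l' => negb (l' =? l)%nat) (seq 1 m))
        ++ [(Cmul (CofR eps) (y l), Cmul (Cmul sq (Cinv st1)) tn, Cmul sq (Cinv st1));
            (Cmul (CofR (2 * eps)) (y l), Cmul q (Cinv t1), C1)])
       (* tau(eps/k * sum of block l) = T^{-eps eta1}_{y_l} on D_0 *)
       (fun j => if in_block N1 k l j then eps / INR k else 0)) [1; -1]) (seq 1 m).

(* On [D_0] the k coordinates of a block form an arithmetic progression of step [-eta1] around
   [y_l].  Since [g(w; e^(eta1/2), 1) = e^(-eta1/2) (e^(w+eta1) - 1) / (e^w - 1)], the factors of
   [M_{-e_1}] indexed by a block telescope into a single factor of the restricted operator, with
   parameters built from [q = e^(k eta1/2)] and [t1].  All shifts [T_{x_i}] with [i] in block [l]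
   project to [T_{y_l}]; their coefficients vanish except for the first coordinate of the block
   (for [eps = 1]) or the last one (for [eps = -1]), because one factor is [g(-eta1; t1, 1) = 0].
   In the surviving coefficient the factors coming from its own block telescope into
   [(q - q^-1) / (t1 - t1^-1)] and [g(2 eps y_l; q t1^-1, 1)].  Well-definedness on [D_0] is
   witnessed by a point whose blocks lie far apart along the real axis. *)

From Pilot Require Import Defs.
From Stdlib Require Import Reals List Lra Lia Field FunctionalExtensionality ClassicalDescription ZArith.
Import ListNotations.
(* [Reals] also exports a constant [C0]; re-import [Defs] so that [C0] is the complex zero. *)
Import Pilot.Defs.
Open Scope R_scope.

Lemma CC_eq (z w : CC) : fst z = fst w -> snd z = snd w -> z = w.
Proof. destruct z, w; simpl; intros; subst; reflexivity. Qed.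

Ltac CC_ext :=
  repeat match goal with
         |- context [?z] => is_var z; lazymatch type of z with CC => destruct z end
         end;
  unfold Csub, Cadd, Copp, Cmul, CofR, C0, C1 in *; apply CC_eq; cbn [fst snd].

Lemma C1_neq_C0 : C1 <> C0.
Proof. unfold C1, C0; intro H; inversion H; lra. Qed.

Lemma CC_ring_theory : ring_theory C0 C1 Cadd Cmul Csub Copp (@eq CC).
Proof. constructor; intros; unfold Csub; CC_ext; ring. Qed.

Lemma CC_field_theory : field_theory C0 C1 Cadd Cmul Csub Copp Cdiv Cinv (@eq CC).
Proof.
  constructor; [exact CC_ring_theory | exact C1_neq_C0 | reflexivity |].
  intros [a b] Hab.
  assert (Hn : a * a + b * b <> 0).
  { intro E; apply Hab; unfold C0; f_equal; nra. }
  unfold Cinv, Cmul, C1; simpl; apply CC_eq; simpl; field; exact Hn.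
Qed.

Add Field CC_field : CC_field_theory.

Lemma Cmul_neq0 a b : a <> C0 -> b <> C0 -> Cmul a b <> C0.
Proof.
  intros Ha Hb H; apply Hb.
  replace b with (Cmul (Cinv a) (Cmul a b)) by (field; exact Ha).
  rewrite H; ring.
Qed.

Lemma Cinv_neq0 a : a <> C0 -> Cinv a <> C0.
Proof.
  intros Ha H; apply C1_neq_C0.
  replace C1 with (Cmul a (Cinv a)) by (field; exact Ha).
  rewrite H; ring.
Qed.

Lemma Cinv_C1 : Cinv C1 = C1.
Proof. field; exact C1_neq_C0. Qed.

Lemma Csub_C1_neq0 a : a <> C1 -> Csub a C1 <> C0.
Proof.
  intros H E; apply H.
  replace a with (Cadd (Csub a C1) C1) by ring.
  rewrite E; ring.
Qed.

Lemma Cexp_add z w : Cexp (Cadd z w) = Cmul (Cexp z) (Cexp w).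
Proof.
  destruct z as [a b], w as [c d]; unfold Cexp, Cadd, Cmul; simpl.
  rewrite exp_plus, cos_plus, sin_plus; apply CC_eq; simpl; ring.
Qed.

Lemma Cexp_C0 : Cexp C0 = C1.
Proof. unfold Cexp, C0, C1; simpl; rewrite exp_0, cos_0, sin_0; apply CC_eq; simpl; ring. Qed.

Lemma Cexp_neq0 z : Cexp z <> C0.
Proof.
  destruct z as [a b]; unfold Cexp, C0; simpl; intro H; inversion H.
  pose proof (exp_pos a); pose proof (sin2_cos2 b); unfold Rsqr in *.
  assert (cos b = 0) by (apply (Rmult_eq_reg_l (exp a)); lra).
  assert (sin b = 0) by (apply (Rmult_eq_reg_l (exp a)); lra).
  nra.
Qed.

Lemma Cexp_eq1 z : Cexp z = C1 -> exists p : Z, z = (0, PI * IZR p).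
Proof.
  destruct z as [a b]; unfold Cexp, C1; intro H; injection H as H1 H2.
  pose proof (exp_pos a); pose proof (sin2_cos2 b); unfold Rsqr in *.
  assert (Hs : sin b = 0) by (apply (Rmult_eq_reg_l (exp a)); lra).
  assert (He : exp a = 1) by nra.
  assert (a = 0) by (rewrite <- exp_0 in He; apply exp_inv; exact He).
  destruct (sin_eq_0_0 b Hs) as [p Hp]; exists p.
  apply CC_eq; simpl; [assumption | rewrite Hp; ring].
Qed.

Lemma Cexp_neq1 z : fst z <> 0 -> Cexp z <> C1.
Proof. intros H E; destruct (Cexp_eq1 z E) as [p ->]; auto. Qed.

Definition epow (et : CC) (c : R) : CC := Cexp (Cmul (CofR c) et).
Definition Cshift (et z : CC) (c : R) : CC := Cadd z (Cmul (CofR c) et).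

Section Epow.
Variable et : CC.

Lemma epow_add a b : epow et (a + b) = Cmul (epow et a) (epow et b).
Proof. unfold epow; rewrite <- Cexp_add; f_equal; CC_ext; ring. Qed.

Lemma epow_0 : epow et 0 = C1.
Proof. unfold epow; rewrite <- Cexp_C0; f_equal; CC_ext; ring. Qed.

Lemma epow_neq0 a : epow et a <> C0.
Proof. apply Cexp_neq0. Qed.

Lemma epow_opp a : epow et (- a) = Cinv (epow et a).
Proof.
  pose proof (epow_neq0 a).
  assert (H1 : Cmul (epow et (- a)) (epow et a) = C1).
  { rewrite <- epow_add, <- epow_0; f_equal; ring. }
  replace (epow et (- a)) with (Cmul (Cmul (epow et (- a)) (epow et a)) (Cinv (epow et a)))
    by (field; assumption).
  rewrite H1; field; assumption.
Qed.

Lemma epow_sub a b : epow et (a - b) = Cmul (epow et a) (Cinv (epow et b)).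
Proof. unfold Rminus; rewrite epow_add, epow_opp; reflexivity. Qed.

Lemma Cexp_Cshift z c : Cexp (Cshift et z c) = Cmul (Cexp z) (epow et c).
Proof. apply Cexp_add. Qed.

Lemma Cprod_epow_const c N :
  Cprod (map (fun _ : nat => epow et c) (seq 1 N)) = epow et (INR N * c).
Proof.
  induction N as [|N IH]; simpl.
  - rewrite Rmult_0_l, epow_0; reflexivity.
  - rewrite <- seq_shift, map_map, IH, <- epow_add; f_equal.
    destruct N; simpl; ring.
Qed.

End Epow.

Lemma Cprod_app l1 l2 : Cprod (l1 ++ l2) = Cmul (Cprod l1) (Cprod l2).
Proof. induction l1 as [|a l1 IH]; simpl; [ring | rewrite IH; ring]. Qed.

Lemma Csum_app l1 l2 : Csum (l1 ++ l2) = Cadd (Csum l1) (Csum l2).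
Proof. induction l1 as [|a l1 IH]; unfold Csum in *; simpl; [ring | rewrite IH; ring]. Qed.

Lemma Cprod_ext {T} (f h : T -> CC) L : (forall j, In j L -> f j = h j) ->
  Cprod (map f L) = Cprod (map h L).
Proof. intros; f_equal; apply map_ext_in; auto. Qed.

Lemma Csum_ext {T} (f h : T -> CC) L : (forall j, In j L -> f j = h j) ->
  Csum (map f L) = Csum (map h L).
Proof. intros; f_equal; apply map_ext_in; auto. Qed.

Lemma Cprod_map_mul {T} (f h : T -> CC) L :
  Cprod (map (fun j => Cmul (f j) (h j)) L) = Cmul (Cprod (map f L)) (Cprod (map h L)).
Proof. induction L as [|a L IH]; simpl; [ring | rewrite IH; ring]. Qed.

Lemma Cprod_flat_map {T U} (f : U -> CC) (G : T -> list U) L :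
  Cprod (map f (flat_map G L)) = Cprod (map (fun l => Cprod (map f (G l))) L).
Proof. induction L as [|a L IH]; simpl; [reflexivity | rewrite map_app, Cprod_app, IH; reflexivity]. Qed.

Lemma Csum_flat_map {T U} (f : U -> CC) (G : T -> list U) L :
  Csum (map f (flat_map G L)) = Csum (map (fun l => Csum (map f (G l))) L).
Proof. induction L as [|a L IH]; simpl; [reflexivity | rewrite map_app, Csum_app, IH; reflexivity]. Qed.

Lemma Cprod_filter_if {T} (f : T -> CC) (P : T -> bool) L :
  Cprod (map f (filter P L)) = Cprod (map (fun j => if P j then f j else C1) L).
Proof. induction L as [|a L IH]; simpl; auto; destruct (P a); simpl; rewrite IH; ring. Qed.

Lemma Csum_filter_if {T} (f : T -> CC) (P : T -> bool) L :
  Csum (map f (filter P L)) = Csum (map (fun j => if P j then f j else C0) L).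
Proof.
  induction L as [|a L IH]; simpl; auto.
  destruct (P a); unfold Csum in *; simpl; rewrite IH; ring.
Qed.

Lemma Cprod_zero {T} (f : T -> CC) L j : In j L -> f j = C0 -> Cprod (map f L) = C0.
Proof.
  induction L as [|a L IH]; simpl; intros Hj Hf; [contradiction|].
  destruct Hj as [-> | Hj]; [rewrite Hf | rewrite IH]; auto; ring.
Qed.

Lemma Csum_zero {T} (f : T -> CC) L : (forall j, In j L -> f j = C0) -> Csum (map f L) = C0.
Proof.
  induction L as [|a L IH]; simpl; intros Hf; auto.
  unfold Csum in *; simpl; rewrite IH, Hf; auto; ring.
Qed.

Lemma Cprod_if_single (A : CC) (f : nat -> CC) L l : NoDup L -> In l L ->
  Cprod (map (fun l' => if (l' =? l)%nat then A else f l') L) =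
  Cmul A (Cprod (map f (filter (fun l' => negb (l' =? l)%nat) L))).
Proof.
  induction L as [|a L IH]; intros Hnd Hin; [contradiction|]; inversion Hnd; subst; simpl.
  destruct (Nat.eqb_spec a l).
  - subst; simpl; f_equal; rewrite Cprod_filter_if; apply Cprod_ext.
    intros j Hj; destruct (Nat.eqb_spec j l); [subst; contradiction | reflexivity].
  - simpl; destruct Hin as [-> | Hin]; [congruence|]; rewrite IH by auto; ring.
Qed.

(** * Products of [g] along arithmetic progressions *)

Lemma Cprod_seq_reflect (f : nat -> CC) N :
  Cprod (map f (seq 1 N)) = Cprod (map (fun p => f (N + 1 - p)%nat) (seq 1 N)).
Proof.
  induction N as [|N IH]; [reflexivity|].
  transitivity (Cmul (Cprod (map f (seq 1 N))) (f (S N))).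
  { rewrite seq_S, map_app, Cprod_app; unfold Cprod at 2; simpl; ring. }
  change (seq 1 (S N)) with (1 :: seq 2 N)%nat.
  rewrite <- (seq_shift N 1), map_cons, map_map, IH.
  replace (S N + 1 - 1)%nat with (S N) by lia.
  change (map (fun x => f (S N + 1 - S x)%nat) (seq 1 N))
    with (map (fun p => f (N + 1 - p)%nat) (seq 1 N)).
  change (Cprod (?a :: ?l)) with (Cmul a (Cprod l)); ring.
Qed.

Lemma Cprod_telescope_mul (f : nat -> CC) N : forall a,
  (forall p, (a <= p < a + N)%nat -> f p <> C0) ->
  Cmul (Cprod (map (fun p => Cdiv (f (S p)) (f p)) (seq a N))) (f a) = f (a + N)%nat.
Proof.
  induction N as [|N IH]; intros a Hf; simpl.
  - rewrite Nat.add_0_r; ring.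
  - replace (a + S N)%nat with (S a + N)%nat by lia.
    rewrite <- (IH (S a)) by (intros; apply Hf; lia).
    field; apply Hf; lia.
Qed.

Lemma g_ratio z a b : a <> C0 -> b <> C0 -> Cmul (Cexp z) (Cmul b b) <> C1 ->
  g z a b = Cmul (Cdiv b a)
    (Cdiv (Csub (Cmul (Cexp z) (Cmul a a)) C1) (Csub (Cmul (Cexp z) (Cmul b b)) C1)).
Proof.
  intros Ha Hb Hz; apply Csub_C1_neq0 in Hz.
  assert (Hd : Csub (Cmul b (Cexp z)) (Cinv b) <> C0).
  { intro E; apply Hz.
    replace (Csub (Cmul (Cexp z) (Cmul b b)) C1)
      with (Cmul b (Csub (Cmul b (Cexp z)) (Cinv b))) by (field; exact Hb).
    rewrite E; ring. }
  unfold g; field; auto.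
Qed.

Definition gpair (u w a b : CC) : CC := Cmul (g (Csub u w) a b) (g (Cadd u w) a b).

Section Progressions.
Variable et : CC.

Lemma g_half_ratio w : Cexp w <> C1 ->
  g w (epow et (/ 2)) C1
  = Cmul (epow et (- / 2)) (Cdiv (Csub (Cmul (Cexp w) (epow et 1)) C1) (Csub (Cexp w) C1)).
Proof.
  intro Hw; rewrite g_ratio; [| apply epow_neq0 | exact C1_neq_C0 |].
  - rewrite <- epow_add, epow_opp; replace (/ 2 + / 2) with 1 by field.
    replace (Cmul C1 C1) with C1 by ring; replace (Cmul (Cexp w) C1) with (Cexp w) by ring.
    unfold Cdiv; ring.
  - replace (Cmul (Cexp w) (Cmul C1 C1)) with (Cexp w) by ring; exact Hw.
Qed.

(* The second hypothesis is the [p = 1] instance of the first unless [N = 0]; it keeps the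
   denominator of the right-hand side non-zero. *)
Lemma Cprod_g_arith z a N :
  (forall p, (1 <= p <= N)%nat -> Cexp (Cshift et z (INR p + a)) <> C1) ->
  Cexp (Cshift et z (1 + a)) <> C1 ->
  Cprod (map (fun p => g (Cshift et z (INR p + a)) (epow et (/ 2)) C1) (seq 1 N))
  = g z (epow et ((INR N + 1 + a) / 2)) (epow et ((1 + a) / 2)).
Proof.
  intros Hp H1.
  set (f := fun p : nat => Csub (Cmul (Cexp z) (epow et (INR p + a))) C1).
  assert (Hf : forall p, (1 <= p <= N)%nat -> f p <> C0).
  { intros p Hp'; apply Csub_C1_neq0; rewrite <- Cexp_Cshift; auto. }
  assert (Hf1 : f 1%nat <> C0).
  { apply Csub_C1_neq0; rewrite <- Cexp_Cshift; simpl INR; exact H1. }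
  rewrite (Cprod_ext _ (fun p => Cmul (epow et (- / 2)) (Cdiv (f (S p)) (f p)))).
  2:{ intros p Hin; apply in_seq in Hin.
      rewrite g_half_ratio by (apply Hp; lia).
      unfold f; rewrite Cexp_Cshift, S_INR.
      replace (INR p + 1 + a) with (INR p + a + 1) by ring.
      rewrite (epow_add et (INR p + a) 1); unfold Cdiv; ring. }
  rewrite Cprod_map_mul, Cprod_epow_const.
  replace (Cprod (map (fun p => Cdiv (f (S p)) (f p)) (seq 1 N))) with (Cdiv (f (1 + N)%nat) (f 1%nat))
    by (rewrite <- (Cprod_telescope_mul f N 1) by (intros; apply Hf; lia); field; exact Hf1).
  set (A := epow et ((INR N + 1 + a) / 2)); set (B := epow et ((1 + a) / 2)).
  assert (EA : Cmul A A = epow et (INR (1 + N) + a)).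
  { unfold A; rewrite <- epow_add, plus_INR; f_equal; simpl; field. }
  assert (EB : Cmul B B = epow et (1 + a)).
  { unfold B; rewrite <- epow_add; f_equal; field. }
  assert (EBA : Cdiv B A = epow et (INR N * - / 2)).
  { unfold Cdiv, A, B; rewrite <- epow_opp, <- epow_add; f_equal; field. }
  rewrite g_ratio by (try apply epow_neq0; rewrite EB, <- Cexp_Cshift; exact H1).
  rewrite EA, EB, EBA; unfold f; simpl INR; reflexivity.
Qed.

Lemma Cprod_g_arith_rev z a N :
  (forall p, (1 <= p <= N)%nat -> Cexp (Cshift et z (INR N + 1 + a - INR p)) <> C1) ->
  Cexp (Cshift et z (1 + a)) <> C1 ->
  Cprod (map (fun p => g (Cshift et z (INR N + 1 + a - INR p)) (epow et (/ 2)) C1) (seq 1 N))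
  = g z (epow et ((INR N + 1 + a) / 2)) (epow et ((1 + a) / 2)).
Proof.
  intros Hp H1.
  assert (Erefl : forall p, (1 <= p <= N)%nat -> INR N + 1 + a - INR (N + 1 - p) = INR p + a).
  { intros p Hp'; rewrite minus_INR, plus_INR by lia; simpl; ring. }
  rewrite Cprod_seq_reflect, <- (Cprod_g_arith z a N); auto.
  - apply Cprod_ext; intros p Hin; apply in_seq in Hin; rewrite Erefl by lia; reflexivity.
  - intros p Hp'; rewrite <- Erefl by lia; apply Hp; lia.
Qed.

Lemma g_shift z s a b : a <> C0 -> b <> C0 -> Cmul (Cexp (Cshift et z s)) (Cmul b b) <> C1 ->
  g (Cshift et z s) a b = g z (Cmul a (epow et (s / 2))) (Cmul b (epow et (s / 2))).
Proof.
  intros Ha Hb Hz.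
  set (E := epow et (s / 2)).
  assert (HE : E <> C0) by apply epow_neq0.
  assert (Hs : Cexp (Cshift et z s) = Cmul (Cexp z) (Cmul E E))
    by (rewrite Cexp_Cshift; unfold E; rewrite <- epow_add; do 2 f_equal; field).
  assert (Hz' : Cmul (Cexp z) (Cmul (Cmul b E) (Cmul b E)) <> C1).
  { replace (Cmul (Cexp z) (Cmul (Cmul b E) (Cmul b E)))
      with (Cmul (Cexp (Cshift et z s)) (Cmul b b)) by (rewrite Hs; ring).
    exact Hz. }
  rewrite !g_ratio by auto using Cmul_neq0.
  rewrite Hs; field; repeat split; auto using Csub_C1_neq0.
Qed.

Lemma Csub_Cshift u w a b : Csub (Cshift et u a) (Cshift et w b) = Cshift et (Csub u w) (a - b).
Proof. unfold Cshift; CC_ext; ring. Qed.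

Lemma Cadd_Cshift u w a b : Cadd (Cshift et u a) (Cshift et w b) = Cshift et (Cadd u w) (a + b).
Proof. unfold Cshift; CC_ext; ring. Qed.

Lemma Cprod_gpair_progression v y s k : (1 <= k)%nat ->
  (forall p, (1 <= p <= k)%nat ->
     Cexp (Csub (Cshift et v s) (Cshift et y ((INR k + 1) / 2 - INR p))) <> C1 /\
     Cexp (Cadd (Cshift et v s) (Cshift et y ((INR k + 1) / 2 - INR p))) <> C1) ->
  Cprod (map (fun p => gpair (Cshift et v s) (Cshift et y ((INR k + 1) / 2 - INR p))
                         (epow et (/ 2)) C1) (seq 1 k))
  = gpair v y (epow et ((INR k + 1) / 4 + s / 2)) (epow et ((1 - INR k) / 4 + s / 2)).
Proof.
  intros Hk H.
  set (a := s - (INR k + 1) / 2).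
  assert (Em : forall p, Csub (Cshift et v s) (Cshift et y ((INR k + 1) / 2 - INR p))
                         = Cshift et (Csub v y) (INR p + a))
    by (intro p; rewrite Csub_Cshift; f_equal; unfold a; field).
  assert (Ep : forall p, Cadd (Cshift et v s) (Cshift et y ((INR k + 1) / 2 - INR p))
                         = Cshift et (Cadd v y) (INR k + 1 + a - INR p))
    by (intro p; rewrite Cadd_Cshift; f_equal; unfold a; field).
  unfold gpair; rewrite Cprod_map_mul.
  setoid_rewrite Em; setoid_rewrite Ep.
  rewrite Cprod_g_arith, Cprod_g_arith_rev.
  - replace ((INR k + 1 + a) / 2) with ((INR k + 1) / 4 + s / 2) by (unfold a; field).
    replace ((1 + a) / 2) with ((1 - INR k) / 4 + s / 2) by (unfold a; field).
    reflexivity.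
  - intros p Hp; rewrite <- Ep; apply H; exact Hp.
  - replace (1 + a) with (INR k + 1 + a - INR k) by ring; rewrite <- Ep; apply H; lia.
  - intros p Hp; rewrite <- Em; apply H; exact Hp.
  - replace (1 + a) with (INR 1 + a) by (simpl; ring); rewrite <- Em; apply H; lia.
Qed.

End Progressions.

Lemma Csum_Cshift_arith et X d N :
  Csum (map (fun s => Cshift et X (INR s + d)) (seq 0 N)) =
  Cadd (Cmul (CofR (INR N)) X) (Cmul (CofR (INR N * (INR N - 1) / 2 + INR N * d)) et).
Proof.
  induction N as [|N IH].
  - unfold Csum; simpl; CC_ext; field.
  - rewrite seq_S, map_app, Csum_app, IH, S_INR; unfold Csum, Cshift; simpl; CC_ext; field.
Qed.

Section D0.
Variables (et : CC) (k N1 m : nat) (x : nat -> CC).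
Hypotheses (Hk : (1 <= k)%nat) (HD : inD0 N1 k m et x).

Lemma inD0_block_step l s : (1 <= l <= m)%nat -> (s < k)%nat ->
  x (N1 + k * (l - 1) + 1 + s)%nat = Cshift et (x (N1 + k * (l - 1) + 1)%nat) (- INR s).
Proof.
  intros Hl; induction s as [|s IH]; intros Hs.
  - rewrite Nat.add_0_r; unfold Cshift; change (INR 0) with 0; CC_ext; ring.
  - specialize (HD l (S s) Hl ltac:(lia)).
    replace (N1 + k * (l - 1) + S s + 1)%nat with (N1 + k * (l - 1) + 1 + S s)%nat in HD by lia.
    replace (N1 + k * (l - 1) + S s)%nat with (N1 + k * (l - 1) + 1 + s)%nat in HD by lia.
    rewrite IH in HD by lia; revert HD; rewrite S_INR; unfold Cshift.
    destruct (x (N1 + k * (l - 1) + 1 + S s)%nat), (x (N1 + k * (l - 1) + 1)%nat), et.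
    unfold Csub, Cadd, Copp, Cmul, CofR; simpl; intro E; injection E as E1 E2.
    apply CC_eq; simpl; lra.
Qed.

Lemma ycoord_block_first l : (1 <= l <= m)%nat ->
  ycoord N1 k x l = Cshift et (x (N1 + k * (l - 1) + 1)%nat) (- ((INR k - 1) / 2)).
Proof.
  intros Hl; unfold ycoord.
  rewrite (map_ext_in _ (fun s => Cshift et (x (N1 + k * (l - 1) + 1)%nat) (INR s + - (INR k - 1)))).
  - rewrite Csum_Cshift_arith.
    assert (INR k <> 0) by (apply not_0_INR; lia).
    unfold Cshift; CC_ext; field; assumption.
  - intros s Hs; apply in_seq in Hs.
    replace (N1 + k * l - s)%nat with (N1 + k * (l - 1) + 1 + (k - 1 - s))%nat.
    + rewrite inD0_block_step by lia; do 3 f_equal.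
      rewrite !minus_INR by lia; simpl; ring.
    + destruct l; [lia|]; replace (S l - 1)%nat with l by lia; rewrite Nat.mul_succ_r; lia.
Qed.

Lemma inD0_block_coord l p : (1 <= l <= m)%nat -> (1 <= p <= k)%nat ->
  x (N1 + k * (l - 1) + p)%nat = Cshift et (ycoord N1 k x l) ((INR k + 1) / 2 - INR p).
Proof.
  intros Hl Hp; rewrite ycoord_block_first by exact Hl.
  replace (N1 + k * (l - 1) + p)%nat with (N1 + k * (l - 1) + 1 + (p - 1))%nat by lia.
  rewrite inD0_block_step, minus_INR by lia; unfold Cshift; simpl; CC_ext; field.
Qed.

End D0.

(** * Blocks of indices and the projection onto [Vbar] *)

Definition block_shift (N1 k l : nat) (e : R) : nat -> R :=
  fun j => if in_block N1 k l j then e / INR k else 0.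

Lemma block_of_index N1 k l p : (1 <= k)%nat -> (1 <= l)%nat -> (1 <= p <= k)%nat ->
  block_of N1 k (N1 + k * (l - 1) + p) = l.
Proof.
  intros Hk Hl Hp; unfold block_of.
  replace (N1 + k * (l - 1) + p - N1 - 1)%nat with ((l - 1) * k + (p - 1))%nat by nia.
  rewrite Nat.div_add_l, Nat.div_small by lia; lia.
Qed.

Lemma block_index_exists N1 k j : (1 <= k)%nat -> (N1 < j)%nat ->
  exists l p, (1 <= l)%nat /\ (1 <= p <= k)%nat /\ j = (N1 + k * (l - 1) + p)%nat.
Proof.
  intros Hk Hj; exists ((j - N1 - 1) / k + 1)%nat, ((j - N1 - 1) mod k + 1)%nat.
  pose proof (Nat.div_mod (j - N1 - 1) k ltac:(lia)).
  pose proof (Nat.mod_upper_bound (j - N1 - 1) k ltac:(lia)).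
  repeat split; lia.
Qed.

Lemma index_cases N1 k m j : (1 <= k)%nat ->
  j = 0%nat \/ (1 <= j <= N1)%nat \/
  (exists l p, (1 <= l <= m)%nat /\ (1 <= p <= k)%nat /\ j = (N1 + k * (l - 1) + p)%nat) \/
  (N1 + m * k < j)%nat.
Proof.
  intros Hk.
  destruct (Nat.eq_dec j 0) as [-> | Hj0]; [now left | right].
  destruct (Nat.le_gt_cases j N1) as [HjN | HjN]; [left; lia | right].
  destruct (Nat.le_gt_cases j (N1 + m * k)) as [Hjn | Hjn]; [left | right; exact Hjn].
  destruct (block_index_exists N1 k j Hk HjN) as (l & p & Hl & Hp & ->).
  exists l, p; repeat split; try lia.
  destruct (Nat.le_gt_cases l m); [lia|].
  destruct l as [|l]; [lia|]; replace (S l - 1)%nat with l in Hjn by lia; nia.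
Qed.

Lemma in_block_index N1 k l l' p : (1 <= k)%nat -> (1 <= l)%nat -> (1 <= l')%nat -> (1 <= p <= k)%nat ->
  in_block N1 k l (N1 + k * (l' - 1) + p) = (l =? l')%nat.
Proof.
  intros Hk Hl Hl' Hp; unfold in_block.
  destruct l as [|l], l' as [|l']; try lia; rewrite !Nat.sub_succ, !Nat.sub_0_r.
  destruct (Nat.ltb_spec (N1 + k * l) (N1 + k * l' + p)), (Nat.leb_spec (N1 + k * l' + p) (N1 + k * S l)),
    (Nat.eqb_spec (S l) (S l')); cbn [andb]; try reflexivity; nia.
Qed.

Lemma in_block_out N1 k m l j : (1 <= l <= m)%nat -> (j <= N1 \/ N1 + m * k < j)%nat ->
  in_block N1 k l j = false.
Proof.
  intros Hl Hj; unfold in_block.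
  destruct (Nat.ltb_spec (N1 + k * (l - 1)) j), (Nat.leb_spec j (N1 + k * l)); try reflexivity.
  assert (k * l <= m * k)%nat by nia; lia.
Qed.

Lemma sum_block_eshift i e B N :
  fold_right Rplus 0 (map (fun s => eshift i e (B + s)) (seq 0 N)) =
  if andb (B <=? i)%nat (i <? B + N)%nat then e else 0.
Proof.
  revert B; induction N as [|N IH]; intros B; simpl.
  - destruct (Nat.leb_spec B i), (Nat.ltb_spec i (B + 0)); cbn [andb]; [lia | reflexivity ..].
  - rewrite Nat.add_0_r, <- seq_shift, map_map.
    rewrite (map_ext (fun s => eshift i e (B + S s)) (fun s => eshift i e (S B + s)))
      by (intro; f_equal; lia).
    rewrite IH; unfold eshift at 1.
    destruct (Nat.eqb_spec B i), (Nat.leb_spec B i), (Nat.leb_spec (S B) i),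
      (Nat.ltb_spec i (S B + N)), (Nat.ltb_spec i (B + S N)); cbn [andb]; try ring; lia.
Qed.

Lemma sum_seq_const (c : R) B N (v : nat -> R) : (forall s, (s < N)%nat -> v (B + s)%nat = c) ->
  fold_right Rplus 0 (map (fun s => v (B + s)%nat) (seq 0 N)) = INR N * c.
Proof.
  revert B; induction N as [|N IH]; intros B Hv; cbn [seq map fold_right]; [simpl; ring|].
  rewrite <- seq_shift, map_map.
  rewrite (map_ext (fun s => v (B + S s)%nat) (fun s => v (S B + s)%nat)) by (intro; f_equal; lia).
  rewrite IH by (intros s Hs; rewrite Nat.add_succ_comm; apply Hv; lia).
  rewrite (Hv 0%nat), S_INR by lia; ring.
Qed.


Lemma block_range_index N1 k l l' p :
  (1 <= k)%nat -> (1 <= l)%nat -> (1 <= l')%nat -> (1 <= p <= k)%nat ->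
  andb (N1 + k * (l' - 1) + 1 <=? N1 + k * (l - 1) + p)%nat
       (N1 + k * (l - 1) + p <? N1 + k * (l' - 1) + 1 + k)%nat = (l =? l')%nat.
Proof.
  intros Hk Hl Hl' Hp.
  destruct l as [|l], l' as [|l']; try lia; rewrite !Nat.sub_succ, !Nat.sub_0_r.
  destruct (Nat.leb_spec (N1 + k * l' + 1) (N1 + k * l + p)),
    (Nat.ltb_spec (N1 + k * l + p) (N1 + k * l' + 1 + k)), (Nat.eqb_spec (S l) (S l'));
    cbn [andb]; try reflexivity; nia.
Qed.

Section Projection.
Variables (N1 k m : nat).
Hypothesis Hk : (1 <= k)%nat.
Local Notation n := (N1 + m * k)%nat.

Lemma proj_zero v : proj N1 k n v 0 = 0.
Proof. reflexivity. Qed.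

Lemma proj_free v j : (1 <= j <= N1)%nat -> proj N1 k n v j = v j.
Proof.
  intros Hj; unfold proj.
  destruct (Nat.leb_spec 1 j), (Nat.leb_spec j N1); cbn [andb]; [reflexivity | lia ..].
Qed.

Lemma proj_beyond v j : (n < j)%nat -> proj N1 k n v j = 0.
Proof.
  intros Hj; unfold proj.
  destruct (Nat.leb_spec 1 j), (Nat.leb_spec j N1), (Nat.ltb_spec N1 j), (Nat.leb_spec j n);
    cbn [andb]; try reflexivity; lia.
Qed.

Lemma proj_block v l p : (1 <= l <= m)%nat -> (1 <= p <= k)%nat ->
  proj N1 k n v (N1 + k * (l - 1) + p)
  = / INR k * fold_right Rplus 0 (map (fun s => v (N1 + k * (l - 1) + 1 + s)%nat) (seq 0 k)).
Proof.
  intros Hl Hp; unfold proj; rewrite block_of_index by lia.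
  assert (k * (l - 1) + p <= m * k)%nat
    by (destruct l as [|l]; [lia|]; rewrite Nat.sub_succ, Nat.sub_0_r; nia).
  set (X := (k * (l - 1))%nat) in *.
  destruct (Nat.leb_spec 1 (N1 + X + p)), (Nat.leb_spec (N1 + X + p) N1),
    (Nat.ltb_spec N1 (N1 + X + p)), (Nat.leb_spec (N1 + X + p) n);
    cbn [andb]; try reflexivity; lia.
Qed.

Lemma proj_eshift_free i e : (1 <= i <= N1)%nat -> proj N1 k n (eshift i e) = eshift i e.
Proof.
  intros Hi; apply functional_extensionality; intro j.
  destruct (index_cases N1 k m j Hk) as [-> | [Hj | [(l & p & Hl & Hp & ->) | Hj]]].
  - rewrite proj_zero; unfold eshift; destruct (Nat.eqb_spec 0 i); [lia | reflexivity].
  - apply proj_free; exact Hj.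
  - rewrite proj_block, (sum_seq_const 0) by
      (lia || (intros s Hs; unfold eshift; destruct (Nat.eqb_spec (N1 + k * (l - 1) + 1 + s) i);
               [nia | reflexivity])).
    unfold eshift; destruct (Nat.eqb_spec (N1 + k * (l - 1) + p) i); [nia | ring].
  - rewrite proj_beyond by exact Hj; unfold eshift; destruct (Nat.eqb_spec j i); [lia | reflexivity].
Qed.

Lemma proj_eshift_block l p e : (1 <= l <= m)%nat -> (1 <= p <= k)%nat ->
  proj N1 k n (eshift (N1 + k * (l - 1) + p) e) = block_shift N1 k l e.
Proof.
  intros Hl Hp; apply functional_extensionality; intro j; unfold block_shift.
  destruct (index_cases N1 k m j Hk) as [-> | [Hj | [(l' & p' & Hl' & Hp' & ->) | Hj]]].
  - rewrite proj_zero, in_block_out with (m := m) by lia; reflexivity.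
  - rewrite proj_free, in_block_out with (m := m) by lia.
    unfold eshift; destruct (Nat.eqb_spec j (N1 + k * (l - 1) + p)); [nia | reflexivity].
  - rewrite proj_block, sum_block_eshift, block_range_index, in_block_index by lia.
    destruct (l =? l')%nat; [field; apply not_0_INR; lia | ring].
  - rewrite proj_beyond, in_block_out with (m := m) by lia; reflexivity.
Qed.

Lemma proj_block_shift l e : (1 <= l <= m)%nat ->
  proj N1 k n (block_shift N1 k l e) = block_shift N1 k l e.
Proof.
  intros Hl; apply functional_extensionality; intro j.
  destruct (index_cases N1 k m j Hk) as [-> | [Hj | [(l' & p' & Hl' & Hp' & ->) | Hj]]].
  - unfold block_shift; rewrite proj_zero, in_block_out with (m := m) by lia; reflexivity.
  - apply proj_free; exact Hj.
  - rewrite proj_block, (sum_seq_const (if (l =? l')%nat then e / INR k else 0)) by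
      (lia || (intros s Hs; unfold block_shift; rewrite <- Nat.add_assoc, in_block_index by lia;
               reflexivity)).
    unfold block_shift; rewrite in_block_index by lia.
    destruct (l =? l')%nat; [field; apply not_0_INR; lia | ring].
  - unfold block_shift at 2; rewrite proj_beyond, in_block_out with (m := m) by lia; reflexivity.
Qed.

End Projection.

Lemma seq_add_shift A k s : seq (A + s) k = map (fun p => (A + p)%nat) (seq s k).
Proof.
  revert s; induction k as [|k IH]; intros s; simpl; [reflexivity|].
  rewrite <- Nat.add_succ_r, IH; reflexivity.
Qed.

Lemma seq_blocks N1 k m :
  seq (S N1) (m * k) = flat_map (fun l => map (fun p => (N1 + k * (l - 1) + p)%nat) (seq 1 k)) (seq 1 m).
Proof.
  induction m as [|m IH]; [reflexivity|].
  replace (S m * k)%nat with (m * k + k)%nat by lia.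
  rewrite seq_app, IH, seq_S, flat_map_app; simpl flat_map; rewrite app_nil_r; f_equal.
  rewrite Nat.sub_0_r, <- seq_add_shift; f_equal; lia.
Qed.

(** * The coefficients of [M_{-e_1}] on [D_0] *)

Lemma Cprod_split_blocks N1 k m (F : nat -> CC) i :
  Cprod (map F (filter (fun j => negb (j =? i)%nat) (seq 1 (N1 + m * k)))) =
  Cmul (Cprod (map (fun j => if negb (j =? i)%nat then F j else C1) (seq 1 N1)))
       (Cprod (map (fun l => Cprod (map (fun p => if negb (N1 + k * (l - 1) + p =? i)%nat
                                                 then F (N1 + k * (l - 1) + p)%nat else C1)
                                        (seq 1 k))) (seq 1 m))).
Proof.
  rewrite Cprod_filter_if, seq_app, map_app, Cprod_app; f_equal.
  replace (1 + N1)%nat with (S N1) by lia.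
  rewrite seq_blocks, Cprod_flat_map; apply Cprod_ext; intros l _; rewrite map_map; reflexivity.
Qed.

Lemma block_index_in N1 k m l p : (1 <= l <= m)%nat -> (1 <= p <= k)%nat ->
  In (N1 + k * (l - 1) + p)%nat (seq 1 (N1 + m * k)).
Proof.
  intros Hl Hp; apply in_seq.
  assert (k * (l - 1) + k <= m * k)%nat
    by (destruct l; [lia|]; replace (S l - 1)%nat with l by lia; nia).
  nia.
Qed.

Lemma seq_1_cons k : (1 <= k)%nat -> seq 1 k = 1%nat :: map S (seq 1 (k - 1)).
Proof. intro Hk; destruct k; [lia|]; simpl; rewrite Nat.sub_0_r, seq_shift; reflexivity. Qed.

Lemma seq_1_snoc k : (1 <= k)%nat -> seq 1 k = seq 1 (k - 1) ++ [k].
Proof. intro Hk; destruct k; [lia|]; rewrite seq_S; simpl; rewrite Nat.sub_0_r; reflexivity. Qed.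

Definition Mcoef (t1 tn : CC) (x : nat -> CC) (n i : nat) (e : R) : CC :=
  Cmul (Cprod (map (fun j => gpair (Cmul (CofR e) (x i)) (x j) t1 C1)
                   (filter (fun j => negb (j =? i)%nat) (seq 1 n))))
       (g (Cmul (CofR e) (x i)) tn C1).

(* On [D_0] only the first (for [e = 1]) and the last (for [e = -1]) coordinate of a block
   keeps a non-zero coefficient. *)
Definition block_lead (k : nat) (e : R) (p0 : nat) : Prop := e = 1 /\ p0 = 1%nat \/ e = -1 /\ p0 = k.

Definition apart (x : nat -> CC) (n i : nat) (u : CC) : Prop :=
  forall j, In j (seq 1 n) -> j <> i -> Cexp (Csub u (x j)) <> C1 /\ Cexp (Cadd u (x j)) <> C1.

(* [(q - q^-1) / (t1 - t1^-1) * B_l^eps] of the statement, as a function of [v = eps y_l]. *)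
Definition Bcoef (et : CC) (k N1 m : nat) (tn : CC) (x : nat -> CC) (l : nat) (v : CC) : CC :=
  Cmul (g C0 (epow et (INR k / 2)) (epow et (/ 2)))
   (Cmul (Cprod (map (fun j => gpair v (x j) (epow et ((INR k + 1) / 4)) (epow et ((INR k - 1) / 4)))
                     (seq 1 N1)))
    (Cmul (Cprod (map (fun l' => gpair v (ycoord N1 k x l') (epow et (INR k / 2)) C1)
                      (filter (fun l' => negb (l' =? l)%nat) (seq 1 m))))
     (Cmul (g v (Cmul (epow et ((INR k - 1) / 4)) tn) (epow et ((INR k - 1) / 4)))
           (g (Cadd v v) (epow et ((INR k - 1) / 2)) C1)))).

Section Coefficients.
Variables (et : CC) (k N1 m : nat) (x : nat -> CC) (tn : CC).
Hypotheses (Hk : (1 <= k)%nat) (HD : inD0 N1 k m et x).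
Local Notation y := (ycoord N1 k x).
Local Notation n := (N1 + m * k)%nat.
Local Notation t1 := (epow et (/ 2)).

Lemma Cprod_block_gpair v s l : (1 <= l <= m)%nat ->
  (forall p, (1 <= p <= k)%nat ->
     Cexp (Csub (Cshift et v s) (x (N1 + k * (l - 1) + p)%nat)) <> C1 /\
     Cexp (Cadd (Cshift et v s) (x (N1 + k * (l - 1) + p)%nat)) <> C1) ->
  Cprod (map (fun p => gpair (Cshift et v s) (x (N1 + k * (l - 1) + p)%nat) t1 C1) (seq 1 k))
  = gpair v (y l) (epow et ((INR k + 1) / 4 + s / 2)) (epow et ((1 - INR k) / 4 + s / 2)).
Proof.
  intros Hl H.
  rewrite (Cprod_ext _ (fun p => gpair (Cshift et v s) (Cshift et (y l) ((INR k + 1) / 2 - INR p)) t1 C1))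
    by (intros p Hp; apply in_seq in Hp; rewrite (inD0_block_coord et k N1 m x Hk HD) by lia; reflexivity).
  apply Cprod_gpair_progression; [exact Hk|].
  intros p Hp; rewrite <- (inD0_block_coord et k N1 m x Hk HD) by lia; auto.
Qed.

Lemma Mcoef_free i e : (1 <= i <= N1)%nat -> apart x n i (Cmul (CofR e) (x i)) ->
  Mcoef t1 tn x n i e =
  Cmul (Cmul (Cprod (map (fun j => gpair (Cmul (CofR e) (x i)) (x j) t1 C1)
                         (filter (fun j => negb (j =? i)%nat) (seq 1 N1))))
             (Cprod (map (fun l => gpair (Cmul (CofR e) (x i)) (y l)
                                     (epow et ((INR k + 1) / 4)) (epow et ((1 - INR k) / 4)))
                         (seq 1 m))))
       (g (Cmul (CofR e) (x i)) tn C1).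
Proof.
  intros Hi Hap; unfold Mcoef; rewrite Cprod_split_blocks, Cprod_filter_if; do 2 f_equal.
  apply Cprod_ext; intros l Hl; apply in_seq in Hl.
  set (u := Cmul (CofR e) (x i)).
  rewrite (Cprod_ext _ (fun p => gpair (Cshift et u 0) (x (N1 + k * (l - 1) + p)%nat) t1 C1)).
  - rewrite Cprod_block_gpair; [| lia |].
    + replace (Cshift et u 0) with u by (unfold Cshift; CC_ext; ring).
      replace ((INR k + 1) / 4 + 0 / 2) with ((INR k + 1) / 4) by field.
      replace ((1 - INR k) / 4 + 0 / 2) with ((1 - INR k) / 4) by field.
      reflexivity.
    + intros p Hp.
      replace (Cshift et u 0) with u by (unfold Cshift; CC_ext; ring).
      apply Hap; [apply block_index_in; lia | nia].
  - intros p Hp; apply in_seq in Hp.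
    replace (negb (N1 + k * (l - 1) + p =? i)%nat) with true
      by (symmetry; apply Bool.negb_true_iff, Nat.eqb_neq; nia).
    f_equal; unfold Cshift; CC_ext; ring.
Qed.

Lemma Cexp_Cshift_C0 r : Cexp (Cshift et C0 r) = epow et r.
Proof. rewrite Cexp_Cshift, Cexp_C0; ring. Qed.

Lemma g_minus_eta : g (Cshift et C0 (-1)) t1 C1 = C0.
Proof.
  unfold g; rewrite Cexp_Cshift_C0, <- epow_add, <- epow_opp.
  replace (/ 2 + -1) with (- / 2) by field; unfold Cdiv; ring.
Qed.

Lemma Mcoef_block_vanish e p l : (1 <= l <= m)%nat ->
  (e = 1 /\ (2 <= p <= k)%nat \/ e = -1 /\ (1 <= p < k)%nat) ->
  Mcoef t1 tn x n (N1 + k * (l - 1) + p) e = C0.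
Proof.
  intros Hl Hp.
  assert (Hx : forall p, (1 <= p <= k)%nat ->
                 x (N1 + k * (l - 1) + p)%nat = Cshift et (y l) ((INR k + 1) / 2 - INR p))
    by (intros; apply (inD0_block_coord et k N1 m x Hk HD); lia).
  unfold Mcoef; destruct Hp as [[-> Hp] | [-> Hp]].
  - rewrite (Cprod_zero _ _ (N1 + k * (l - 1) + (p - 1))%nat); [ring | |].
    + apply filter_In; split; [apply block_index_in; lia|].
      apply Bool.negb_true_iff, Nat.eqb_neq; lia.
    + unfold gpair; rewrite !Hx, minus_INR by lia.
      replace (Csub _ _) with (Cshift et C0 (-1)) by (unfold Cshift; change (INR 1) with 1; CC_ext; field).
      rewrite g_minus_eta; ring.
  - rewrite (Cprod_zero _ _ (N1 + k * (l - 1) + (p + 1))%nat); [ring | |].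
    + apply filter_In; split; [apply block_index_in; lia|].
      apply Bool.negb_true_iff, Nat.eqb_neq; lia.
    + unfold gpair; rewrite !Hx, plus_INR by lia.
      replace (Cadd _ _) with (Cshift et C0 (-1)) by (unfold Cshift; change (INR 1) with 1; CC_ext; field).
      rewrite g_minus_eta; ring.
Qed.

Lemma Csum_block_Mcoef e p0 l : (1 <= l <= m)%nat ->
  block_lead k e p0 ->
  Csum (map (fun p => Mcoef t1 tn x n (N1 + k * (l - 1) + p) e) (seq 1 k))
  = Mcoef t1 tn x n (N1 + k * (l - 1) + p0) e.
Proof.
  intros Hl [[-> ->] | [-> ->]].
  - rewrite seq_1_cons, map_cons, map_map by exact Hk.
    change (Csum (?a :: ?l)) with (Cadd a (Csum l)).
    rewrite Csum_zero by
      (intros p Hp; apply in_seq in Hp; apply Mcoef_block_vanish; [exact Hl | left; split; [reflexivity | lia]]).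
    ring.
  - rewrite seq_1_snoc, map_app, Csum_app by exact Hk.
    rewrite Csum_zero by
      (intros p Hp; apply in_seq in Hp; apply Mcoef_block_vanish; [exact Hl | right; split; [reflexivity | lia]]).
    unfold Csum; simpl; ring.
Qed.

Lemma g_shift_lead z a : a <> C0 -> Cexp (Cshift et z ((INR k - 1) / 2)) <> C1 ->
  g (Cshift et z ((INR k - 1) / 2)) a C1
  = g z (Cmul (epow et ((INR k - 1) / 4)) a) (epow et ((INR k - 1) / 4)).
Proof.
  intros Ha Hz; rewrite g_shift; auto using C1_neq_C0.
  - replace ((INR k - 1) / 2 / 2) with ((INR k - 1) / 4) by field; f_equal; ring.
  - replace (Cmul (Cexp (Cshift et z ((INR k - 1) / 2))) (Cmul C1 C1))
      with (Cexp (Cshift et z ((INR k - 1) / 2))) by ring.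
    exact Hz.
Qed.

Lemma gpair_lead v w :
  Cexp (Csub (Cshift et v ((INR k - 1) / 2)) w) <> C1 ->
  Cexp (Cadd (Cshift et v ((INR k - 1) / 2)) w) <> C1 ->
  gpair (Cshift et v ((INR k - 1) / 2)) w t1 C1
  = gpair v w (epow et ((INR k + 1) / 4)) (epow et ((INR k - 1) / 4)).
Proof.
  assert (Et1 : Cmul (epow et ((INR k - 1) / 4)) t1 = epow et ((INR k + 1) / 4))
    by (rewrite <- epow_add; f_equal; field).
  unfold gpair.
  replace (Csub (Cshift et v ((INR k - 1) / 2)) w)
    with (Cshift et (Csub v w) ((INR k - 1) / 2)) by (unfold Cshift; CC_ext; ring).
  replace (Cadd (Cshift et v ((INR k - 1) / 2)) w)
    with (Cshift et (Cadd v w) ((INR k - 1) / 2)) by (unfold Cshift; CC_ext; ring).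
  intros H1 H2; rewrite !g_shift_lead, Et1 by (auto; apply epow_neq0); reflexivity.
Qed.

Lemma block_index_neq l l' p p' : (1 <= l)%nat -> (1 <= l')%nat -> l <> l' ->
  (1 <= p <= k)%nat -> (1 <= p' <= k)%nat ->
  (N1 + k * (l - 1) + p <> N1 + k * (l' - 1) + p')%nat.
Proof.
  intros Hl Hl' Hne Hp Hp'; destruct l as [|l], l' as [|l']; try lia.
  rewrite !Nat.sub_succ, !Nat.sub_0_r; destruct (Nat.lt_ge_cases l l'); nia.
Qed.

Lemma Cprod_block_other v l l' p0 : (1 <= l <= m)%nat -> (1 <= l' <= m)%nat -> l' <> l ->
  (1 <= p0 <= k)%nat ->
  apart x n (N1 + k * (l - 1) + p0) (Cshift et v ((INR k - 1) / 2)) ->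
  Cprod (map (fun p => if negb (N1 + k * (l' - 1) + p =? N1 + k * (l - 1) + p0)%nat
                       then gpair (Cshift et v ((INR k - 1) / 2)) (x (N1 + k * (l' - 1) + p)%nat) t1 C1
                       else C1) (seq 1 k))
  = gpair v (y l') (epow et (INR k / 2)) C1.
Proof.
  intros Hl Hl' Hne Hp0 Hap.
  rewrite (Cprod_ext _ (fun p => gpair (Cshift et v ((INR k - 1) / 2))
                                   (x (N1 + k * (l' - 1) + p)%nat) t1 C1)).
  - rewrite Cprod_block_gpair; [| lia |].
    + replace ((INR k + 1) / 4 + (INR k - 1) / 2 / 2) with (INR k / 2) by field.
      replace ((1 - INR k) / 4 + (INR k - 1) / 2 / 2) with 0 by field.
      rewrite epow_0; reflexivity.
    + intros p Hp; apply Hap; [apply block_index_in; lia |].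
      apply block_index_neq; lia.
  - intros p Hp; apply in_seq in Hp.
    replace (negb (N1 + k * (l' - 1) + p =? N1 + k * (l - 1) + p0)%nat) with true; [reflexivity|].
    symmetry; apply Bool.negb_true_iff, Nat.eqb_neq, block_index_neq; lia.
Qed.

Lemma g_arith_periods :
  g C0 (epow et ((INR (k - 1) + 1 + 0) / 2)) (epow et ((1 + 0) / 2))
  = g C0 (epow et (INR k / 2)) t1.
Proof. rewrite minus_INR by lia; do 2 (f_equal; f_equal); simpl; field. Qed.

Lemma g_arith_double w :
  g w (epow et ((INR (k - 1) + 1 + -1) / 2)) (epow et ((1 + -1) / 2))
  = g w (epow et ((INR k - 1) / 2)) C1.
Proof.
  rewrite minus_INR by lia; replace ((1 + -1) / 2) with 0 by field; rewrite epow_0.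
  do 3 f_equal; simpl; field.
Qed.

Hypotheses (Htn : tn <> C0) (Hnt : forall r, (1 <= r)%nat -> epow et (INR r) <> C1).

Lemma Cexp_Cshift_C0_neq1 r : (1 <= r)%nat -> Cexp (Cshift et C0 (INR r + 0)) <> C1.
Proof. intros Hr; rewrite Cexp_Cshift_C0, Rplus_0_r; apply Hnt; exact Hr. Qed.

Lemma Cprod_block_first l : (1 <= l <= m)%nat ->
  apart x n (N1 + k * (l - 1) + 1) (Cmul (CofR 1) (x (N1 + k * (l - 1) + 1)%nat)) ->
  Cexp (Cadd (Cmul (CofR 1) (y l)) (Cmul (CofR 1) (y l))) <> C1 ->
  Cprod (map (fun p => if negb (N1 + k * (l - 1) + p =? N1 + k * (l - 1) + 1)%nat
                       then gpair (Cmul (CofR 1) (x (N1 + k * (l - 1) + 1)%nat))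
                                  (x (N1 + k * (l - 1) + p)%nat) t1 C1
                       else C1) (seq 1 k))
  = Cmul (g C0 (epow et (INR k / 2)) t1)
         (g (Cadd (Cmul (CofR 1) (y l)) (Cmul (CofR 1) (y l))) (epow et ((INR k - 1) / 2)) C1).
Proof.
  intros Hl Hap H2.
  assert (Hx : forall p, (1 <= p <= k)%nat ->
                 x (N1 + k * (l - 1) + p)%nat = Cshift et (y l) ((INR k + 1) / 2 - INR p))
    by (intros; apply (inD0_block_coord et k N1 m x Hk HD); lia).
  set (v := Cmul (CofR 1) (y l)) in *.
  assert (Eplus : forall r, (r < k)%nat -> Cadd (Cmul (CofR 1) (x (N1 + k * (l - 1) + 1)%nat))
                                 (x (N1 + k * (l - 1) + S r)%nat)
                            = Cshift et (Cadd v v) (INR (k - 1) + 1 + -1 - INR r))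
    by (intros r Hr; rewrite !Hx, (S_INR r), minus_INR by lia; unfold v, Cshift;
        change (INR 1) with 1; CC_ext; field).
  rewrite seq_1_cons, map_cons, map_map, Nat.eqb_refl by exact Hk.
  cbn [negb]; change (Cprod (C1 :: ?l)) with (Cmul C1 (Cprod l)).
  rewrite (Cprod_ext _ (fun r => Cmul (g (Cshift et C0 (INR r + 0)) t1 C1)
                                       (g (Cshift et (Cadd v v) (INR (k - 1) + 1 + -1 - INR r)) t1 C1))).
  - rewrite Cprod_map_mul, Cprod_g_arith, Cprod_g_arith_rev, g_arith_periods, g_arith_double; [ring | ..].
    + intros r Hr; rewrite <- Eplus by lia.
      apply (Hap (N1 + k * (l - 1) + S r)%nat); [apply block_index_in | ]; lia.
    + replace (Cshift et (Cadd v v) (1 + -1)) with (Cadd v v) by (unfold Cshift; CC_ext; ring).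
      exact H2.
    + intros r Hr; apply Cexp_Cshift_C0_neq1; lia.
    + change (1 + 0) with (INR 1 + 0); apply Cexp_Cshift_C0_neq1; lia.
  - intros r Hr; apply in_seq in Hr.
    replace (negb (N1 + k * (l - 1) + S r =? N1 + k * (l - 1) + 1)%nat) with true
      by (symmetry; apply Bool.negb_true_iff, Nat.eqb_neq; lia).
    unfold gpair; rewrite Eplus by lia; f_equal; f_equal.
    rewrite !Hx by lia; unfold Cshift; change (INR 1) with 1; rewrite (S_INR r); CC_ext; field.
Qed.

Lemma Cprod_block_last l : (1 <= l <= m)%nat ->
  apart x n (N1 + k * (l - 1) + k) (Cmul (CofR (-1)) (x (N1 + k * (l - 1) + k)%nat)) ->
  Cexp (Cadd (Cmul (CofR (-1)) (y l)) (Cmul (CofR (-1)) (y l))) <> C1 ->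
  Cprod (map (fun p => if negb (N1 + k * (l - 1) + p =? N1 + k * (l - 1) + k)%nat
                       then gpair (Cmul (CofR (-1)) (x (N1 + k * (l - 1) + k)%nat))
                                  (x (N1 + k * (l - 1) + p)%nat) t1 C1
                       else C1) (seq 1 k))
  = Cmul (g C0 (epow et (INR k / 2)) t1)
         (g (Cadd (Cmul (CofR (-1)) (y l)) (Cmul (CofR (-1)) (y l))) (epow et ((INR k - 1) / 2)) C1).
Proof.
  intros Hl Hap H2.
  assert (Hx : forall p, (1 <= p <= k)%nat ->
                 x (N1 + k * (l - 1) + p)%nat = Cshift et (y l) ((INR k + 1) / 2 - INR p))
    by (intros; apply (inD0_block_coord et k N1 m x Hk HD); lia).
  set (v := Cmul (CofR (-1)) (y l)) in *.
  assert (Eminus : forall p, (1 <= p <= k)%nat ->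
                     Csub (Cmul (CofR (-1)) (x (N1 + k * (l - 1) + k)%nat))
                          (x (N1 + k * (l - 1) + p)%nat)
                     = Cshift et (Cadd v v) (INR p + -1))
    by (intros p Hp; rewrite !Hx by lia; unfold v, Cshift; CC_ext; field).
  rewrite seq_1_snoc, map_app, Cprod_app by exact Hk; cbn [map]; rewrite Nat.eqb_refl.
  change (Cprod [if negb true then ?a else C1]) with (Cmul C1 C1).
  rewrite (Cprod_ext _ (fun p => Cmul (g (Cshift et (Cadd v v) (INR p + -1)) t1 C1)
                                       (g (Cshift et C0 (INR (k - 1) + 1 + 0 - INR p)) t1 C1))).
  - rewrite Cprod_map_mul, Cprod_g_arith, Cprod_g_arith_rev, g_arith_periods, g_arith_double; [ring | ..].
    + intros p Hp; replace (INR (k - 1) + 1 + 0 - INR p) with (INR (k - p) + 0)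
        by (rewrite !minus_INR by lia; simpl; ring).
      apply Cexp_Cshift_C0_neq1; lia.
    + change (1 + 0) with (INR 1 + 0); apply Cexp_Cshift_C0_neq1; lia.
    + intros p Hp; rewrite <- Eminus by lia.
      apply (Hap (N1 + k * (l - 1) + p)%nat); [apply block_index_in | ]; lia.
    + replace (Cshift et (Cadd v v) (1 + -1)) with (Cadd v v) by (unfold Cshift; CC_ext; ring).
      exact H2.
  - intros p Hp; apply in_seq in Hp.
    replace (negb (N1 + k * (l - 1) + p =? N1 + k * (l - 1) + k)%nat) with true
      by (symmetry; apply Bool.negb_true_iff, Nat.eqb_neq; lia).
    unfold gpair; rewrite Eminus by lia; f_equal; f_equal.
    rewrite !Hx, minus_INR by lia; unfold Cshift; change (INR 1) with 1; CC_ext; field.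
Qed.

Lemma Mcoef_block_lead e p0 l : (1 <= l <= m)%nat ->
  block_lead k e p0 ->
  apart x n (N1 + k * (l - 1) + p0) (Cmul (CofR e) (x (N1 + k * (l - 1) + p0)%nat)) ->
  Cexp (Cmul (CofR e) (x (N1 + k * (l - 1) + p0)%nat)) <> C1 ->
  Cexp (Cadd (Cmul (CofR e) (y l)) (Cmul (CofR e) (y l))) <> C1 ->
  Mcoef t1 tn x n (N1 + k * (l - 1) + p0) e = Bcoef et k N1 m tn x l (Cmul (CofR e) (y l)).
Proof.
  intros Hl Hlead Hap Hu1 H2.
  assert (Hp0 : (1 <= p0 <= k)%nat) by (destruct Hlead as [[_ ->] | [_ ->]]; lia).
  assert (Hself := Hlead).
  set (i := (N1 + k * (l - 1) + p0)%nat) in *.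
  set (v := Cmul (CofR e) (y l)) in *.
  assert (Hu : Cmul (CofR e) (x i) = Cshift et v ((INR k - 1) / 2)).
  { unfold i, v; rewrite (inD0_block_coord et k N1 m x Hk HD) by lia.
    destruct Hlead as [[-> ->] | [-> ->]]; unfold Cshift; change (INR 1) with 1; CC_ext; field. }
  unfold Mcoef; rewrite Cprod_split_blocks.
  rewrite (Cprod_ext (fun j => if negb (j =? i)%nat then gpair (Cmul (CofR e) (x i)) (x j) t1 C1 else C1)
                     (fun j => gpair v (x j) (epow et ((INR k + 1) / 4)) (epow et ((INR k - 1) / 4)))).
  2:{ intros j Hj; apply in_seq in Hj.
      replace (negb (j =? i)%nat) with true
        by (symmetry; apply Bool.negb_true_iff, Nat.eqb_neq; unfold i; nia).
      destruct (Hap j ltac:(apply in_seq; lia) ltac:(unfold i; nia)) as [Hm Hp].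
      rewrite Hu in Hm, Hp |- *; apply gpair_lead; assumption. }
  rewrite (Cprod_ext _ (fun l' => if (l' =? l)%nat
                                  then Cmul (g C0 (epow et (INR k / 2)) t1)
                                            (g (Cadd v v) (epow et ((INR k - 1) / 2)) C1)
                                  else gpair v (y l') (epow et (INR k / 2)) C1) (seq 1 m)).
  2:{ intros l' Hl'; apply in_seq in Hl'.
      destruct (Nat.eqb_spec l' l) as [-> | Hne].
      - destruct Hself as [[-> ->] | [-> ->]];
          [apply Cprod_block_first | apply Cprod_block_last]; assumption.
      - rewrite Hu; apply Cprod_block_other; try lia; rewrite <- Hu; exact Hap. }
  rewrite Cprod_if_single by (apply seq_NoDup || (apply in_seq; lia)).
  rewrite Hu, g_shift_lead by (auto; rewrite <- Hu; exact Hu1).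
  unfold Bcoef; ring.
Qed.

End Coefficients.

Lemma gden_C1_neq0 z : gden z C1 <> C0 <-> Cexp z <> C1.
Proof.
  unfold gden; rewrite Cinv_C1; split; intros H E; apply H.
  - rewrite E; ring.
  - replace (Cexp z) with (Cadd (Csub (Cmul C1 (Cexp z)) C1) C1) by ring; rewrite E; ring.
Qed.

Lemma g_C0 a b : g C0 a b = Cdiv (Csub a (Cinv a)) (Csub b (Cinv b)).
Proof.
  unfold g; rewrite Cexp_C0.
  replace (Cmul a C1) with a by ring; replace (Cmul b C1) with b by ring; reflexivity.
Qed.

Lemma Cprod_flat_map_gpair u (w : nat -> CC) a b L :
  Cprod (map (fun f : CC * CC * CC => match f with (z, a, b) => g z a b end)
             (flat_map (fun j => [(Csub u (w j), a, b); (Cadd u (w j), a, b)]) L))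
  = Cprod (map (fun j => gpair u (w j) a b) L).
Proof. induction L as [|j L IH]; simpl; [reflexivity | rewrite IH; unfold gpair; ring]. Qed.

Lemma tval_M_term t1 tn (x : nat -> CC) n i e sh :
  tval (mkTerm C1 (flat_map (fun j => [(Csub (Cmul (CofR e) (x i)) (x j), t1, C1);
                                       (Cadd (Cmul (CofR e) (x i)) (x j), t1, C1)])
                     (filter (fun j => negb (j =? i)%nat) (seq 1 n))
                   ++ [(Cmul (CofR e) (x i), tn, C1)]) sh)
  = Mcoef t1 tn x n i e.
Proof.
  unfold tval; cbn [scal facs]; rewrite map_app, Cprod_app, Cprod_flat_map_gpair.
  unfold Mcoef; simpl; ring.
Qed.

Lemma tval_Mbar_free_term t1 tn (x y : nat -> CC) N1 m i e a b sh :
  tval (mkTerm C1 (flat_map (fun j => [(Csub (Cmul (CofR e) (x i)) (x j), t1, C1);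
                                       (Cadd (Cmul (CofR e) (x i)) (x j), t1, C1)])
                     (filter (fun j => negb (j =? i)%nat) (seq 1 N1))
                   ++ flat_map (fun l => [(Csub (Cmul (CofR e) (x i)) (y l), a, b);
                                          (Cadd (Cmul (CofR e) (x i)) (y l), a, b)]) (seq 1 m)
                   ++ [(Cmul (CofR e) (x i), tn, C1)]) sh)
  = Cmul (Cmul (Cprod (map (fun j => gpair (Cmul (CofR e) (x i)) (x j) t1 C1)
                           (filter (fun j => negb (j =? i)%nat) (seq 1 N1))))
               (Cprod (map (fun l => gpair (Cmul (CofR e) (x i)) (y l) a b) (seq 1 m))))
         (g (Cmul (CofR e) (x i)) tn C1).
Proof.
  unfold tval; cbn [scal facs]; rewrite !map_app, !Cprod_app, !Cprod_flat_map_gpair.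
  simpl; ring.
Qed.

Lemma tval_Mbar_block_term et k N1 m tn (x : nat -> CC) l e sh :
  tval (mkTerm
     (Cdiv (Csub (epow et (INR k / 2)) (Cinv (epow et (INR k / 2))))
           (Csub (epow et (/ 2)) (Cinv (epow et (/ 2)))))
     (flat_map (fun j =>
          [(Csub (Cmul (CofR e) (ycoord N1 k x l)) (x j),
            Cmul (epow et (INR k / 4)) (epow et (/ 4)), Cmul (epow et (INR k / 4)) (Cinv (epow et (/ 4))));
           (Cadd (Cmul (CofR e) (ycoord N1 k x l)) (x j),
            Cmul (epow et (INR k / 4)) (epow et (/ 4)), Cmul (epow et (INR k / 4)) (Cinv (epow et (/ 4))))])
          (seq 1 N1)
      ++ flat_map (fun l' =>
          [(Csub (Cmul (CofR e) (ycoord N1 k x l)) (ycoord N1 k x l'), epow et (INR k / 2), C1);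
           (Cadd (Cmul (CofR e) (ycoord N1 k x l)) (ycoord N1 k x l'), epow et (INR k / 2), C1)])
          (filter (fun l' => negb (l' =? l)%nat) (seq 1 m))
      ++ [(Cmul (CofR e) (ycoord N1 k x l),
           Cmul (Cmul (epow et (INR k / 4)) (Cinv (epow et (/ 4)))) tn,
           Cmul (epow et (INR k / 4)) (Cinv (epow et (/ 4))));
          (Cmul (CofR (2 * e)) (ycoord N1 k x l),
           Cmul (epow et (INR k / 2)) (Cinv (epow et (/ 2))), C1)]) sh)
  = Bcoef et k N1 m tn x l (Cmul (CofR e) (ycoord N1 k x l)).
Proof.
  assert (E1 : Cmul (epow et (INR k / 4)) (epow et (/ 4)) = epow et ((INR k + 1) / 4))
    by (rewrite <- epow_add; f_equal; field).
  assert (E2 : Cmul (epow et (INR k / 4)) (Cinv (epow et (/ 4))) = epow et ((INR k - 1) / 4))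
    by (rewrite <- epow_sub; f_equal; field).
  assert (E3 : Cmul (epow et (INR k / 2)) (Cinv (epow et (/ 2))) = epow et ((INR k - 1) / 2))
    by (rewrite <- epow_sub; f_equal; field).
  assert (E4 : Cmul (CofR (2 * e)) (ycoord N1 k x l)
               = Cadd (Cmul (CofR e) (ycoord N1 k x l)) (Cmul (CofR e) (ycoord N1 k x l)))
    by (CC_ext; ring).
  unfold tval; cbn [scal facs]; rewrite E1, E2, E3, E4, !map_app, !Cprod_app, !Cprod_flat_map_gpair.
  unfold Bcoef; rewrite g_C0; simpl; ring.
Qed.

Lemma M_op_defined n t1 tn (x : nat -> CC) i e :
  Forall tdefined (M_op n t1 tn x) -> In i (seq 1 n) -> (e = 1 \/ e = -1) ->
  apart x n i (Cmul (CofR e) (x i)) /\ Cexp (Cmul (CofR e) (x i)) <> C1.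
Proof.
  intros H Hi He; rewrite Forall_forall in H.
  assert (Ht : tdefined (mkTerm C1
       (flat_map (fun j => [(Csub (Cmul (CofR e) (x i)) (x j), t1, C1);
                            (Cadd (Cmul (CofR e) (x i)) (x j), t1, C1)])
          (filter (fun j => negb (j =? i)%nat) (seq 1 n)) ++ [(Cmul (CofR e) (x i), tn, C1)])
       (eshift i e))).
  { apply H; unfold M_op; apply in_flat_map; exists i; split; auto.
    destruct He as [-> | ->]; simpl; auto. }
  unfold tdefined in Ht; cbn [facs] in Ht; rewrite Forall_app in Ht; destruct Ht as [H1 H2].
  rewrite Forall_forall in H1, H2; split.
  - intros j Hj Hji.
    assert (Hjf : In j (filter (fun j => negb (j =? i)%nat) (seq 1 n)))
      by (apply filter_In; split; auto; apply Bool.negb_true_iff, Nat.eqb_neq; auto).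
    split; apply gden_C1_neq0.
    + apply (H1 (Csub (Cmul (CofR e) (x i)) (x j), t1, C1)), in_flat_map; exists j; simpl; auto.
    + apply (H1 (Cadd (Cmul (CofR e) (x i)) (x j), t1, C1)), in_flat_map; exists j; simpl; auto.
  - apply gden_C1_neq0, (H2 (Cmul (CofR e) (x i), tn, C1)); simpl; auto.
Qed.

Lemma Mbar_op_defined N1 k m n q t1 sq st1 tn (x : nat -> CC) l e :
  Forall tdefined (Mbar_op N1 k m n q t1 sq st1 tn x) -> In l (seq 1 m) -> (e = 1 \/ e = -1) ->
  Cexp (Cadd (Cmul (CofR e) (ycoord N1 k x l)) (Cmul (CofR e) (ycoord N1 k x l))) <> C1.
Proof.
  intros H Hl He; unfold Mbar_op in H; rewrite Forall_app in H; destruct H as [_ H].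
  rewrite Forall_forall in H.
  replace (Cadd (Cmul (CofR e) (ycoord N1 k x l)) (Cmul (CofR e) (ycoord N1 k x l)))
    with (Cmul (CofR (2 * e)) (ycoord N1 k x l)) by (CC_ext; ring).
  apply gden_C1_neq0.
  pose proof (fun t Ht => H t (proj2 (in_flat_map _ _ _) (ex_intro _ l (conj Hl Ht)))) as Hl'.
  clear H; cbv beta in Hl'.
  destruct He as [-> | ->];
    [specialize (Hl' _ (or_introl eq_refl)) | specialize (Hl' _ (or_intror (or_introl eq_refl)))];
    unfold tdefined in Hl'; cbn [facs] in Hl'; rewrite !Forall_app in Hl';
    destruct Hl' as (_ & _ & Ht); inversion Ht as [|? ? ? Ht2]; inversion Ht2; auto.
Qed.

Definition Cif (P : Prop) (c : CC) : CC := if excluded_middle_informative P then c else C0.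

Lemma restr_coef_Cif N1 k n D lam (x : nat -> CC) :
  restr_coef N1 k n D lam x = Csum (map (fun t => Cif (proj N1 k n (shift t) = lam) (tval t)) D).
Proof.
  unfold restr_coef; rewrite Csum_filter_if; apply Csum_ext; intros t _.
  unfold Cif; destruct (excluded_middle_informative _); reflexivity.
Qed.

Lemma Csum_pm (f : R -> CC) : Csum (map f [1; -1]) = Cadd (f 1) (f (-1)).
Proof. unfold Csum; simpl; ring. Qed.

Lemma Csum_map_add {T} (f h : T -> CC) L :
  Csum (map (fun j => Cadd (f j) (h j)) L) = Cadd (Csum (map f L)) (Csum (map h L)).
Proof. induction L as [|a L IH]; unfold Csum in *; simpl; [ring | rewrite IH; ring]. Qed.

Lemma Csum_Cif {T} P (f : T -> CC) L : Csum (map (fun j => Cif P (f j)) L) = Cif P (Csum (map f L)).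
Proof.
  unfold Cif; destruct (excluded_middle_informative P); [reflexivity|].
  apply Csum_zero; reflexivity.
Qed.

Lemma Csum_split_blocks N1 k m (f : nat -> CC) :
  Csum (map f (seq 1 (N1 + m * k))) =
  Cadd (Csum (map f (seq 1 N1)))
       (Csum (map (fun l => Csum (map (fun p => f (N1 + k * (l - 1) + p)%nat) (seq 1 k))) (seq 1 m))).
Proof.
  rewrite seq_app, map_app, Csum_app; f_equal; replace (1 + N1)%nat with (S N1) by lia.
  rewrite seq_blocks, Csum_flat_map; apply Csum_ext; intros; rewrite map_map; reflexivity.
Qed.

Section Restriction.
Variables (et : CC) (k N1 m : nat) (x : nat -> CC) (tn : CC).
Hypotheses (Hk : (1 <= k)%nat) (HD : inD0 N1 k m et x) (Htn : tn <> C0)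
  (Hnt : forall r, (1 <= r)%nat -> epow et (INR r) <> C1).
Local Notation n := (N1 + m * k)%nat.
Local Notation t1 := (epow et (/ 2)).
Local Notation Mb :=
  (Mbar_op N1 k m n (epow et (INR k / 2)) t1 (epow et (INR k / 4)) (epow et (/ 4)) tn x).

Hypotheses (HM : Forall tdefined (M_op n t1 tn x)) (HMb : Forall tdefined Mb).

Lemma Csum_block_Cif_Mcoef lam l : (1 <= l <= m)%nat ->
  Csum (map (fun p => Cadd (Cif (block_shift N1 k l 1 = lam) (Mcoef t1 tn x n (N1 + k * (l - 1) + p) 1))
                           (Cif (block_shift N1 k l (-1) = lam) (Mcoef t1 tn x n (N1 + k * (l - 1) + p) (-1))))
            (seq 1 k))
  = Cadd (Cif (block_shift N1 k l 1 = lam) (Bcoef et k N1 m tn x l (Cmul (CofR 1) (ycoord N1 k x l))))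
         (Cif (block_shift N1 k l (-1) = lam) (Bcoef et k N1 m tn x l (Cmul (CofR (-1)) (ycoord N1 k x l)))).
Proof.
  intros Hl; rewrite Csum_map_add, !Csum_Cif.
  assert (Hlead : forall e p0, block_lead k e p0 ->
            Csum (map (fun p => Mcoef t1 tn x n (N1 + k * (l - 1) + p) e) (seq 1 k))
            = Bcoef et k N1 m tn x l (Cmul (CofR e) (ycoord N1 k x l))).
  { intros e p0 Hlead.
    assert (He : e = 1 \/ e = -1) by (destruct Hlead as [[-> _] | [-> _]]; auto).
    assert (Hin : In (N1 + k * (l - 1) + p0)%nat (seq 1 n))
      by (apply block_index_in; destruct Hlead as [[_ ->] | [_ ->]]; lia).
    destruct (M_op_defined _ _ _ _ _ _ HM Hin He) as [Hap Hu].
    rewrite (Csum_block_Mcoef et k N1 m x tn Hk HD e p0) by assumption.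
    apply Mcoef_block_lead; auto.
    apply (Mbar_op_defined _ _ _ _ _ _ _ _ _ _ _ _ HMb); [apply in_seq; lia | exact He]. }
  rewrite (Hlead 1 1%nat), (Hlead (-1) k) by (unfold block_lead; auto); reflexivity.
Qed.

Lemma restr_coef_M_Mbar lam : restr_coef N1 k n (M_op n t1 tn x) lam x = restr_coef N1 k n Mb lam x.
Proof.
  assert (E1 : Cmul (epow et (INR k / 4)) (epow et (/ 4)) = epow et ((INR k + 1) / 4))
    by (rewrite <- epow_add; f_equal; field).
  assert (E2 : Cmul (Cinv (epow et (INR k / 4))) (epow et (/ 4)) = epow et ((1 - INR k) / 4))
    by (rewrite <- epow_opp, <- epow_add; f_equal; field).
  rewrite !restr_coef_Cif; unfold M_op, Mbar_op; cbv zeta.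
  rewrite map_app, Csum_app, !Csum_flat_map, Csum_split_blocks; f_equal; apply Csum_ext.
  - intros i Hi; apply in_seq in Hi; rewrite !map_map, !Csum_pm; cbn [shift].
    rewrite !proj_eshift_free, !tval_M_term, !tval_Mbar_free_term, E1, E2 by lia.
    rewrite !(Mcoef_free et k N1 m x tn Hk HD) by
      (lia || (apply (M_op_defined _ _ _ _ _ _ HM); [apply in_seq; lia | auto])).
    reflexivity.
  - intros l Hl; apply in_seq in Hl; rewrite map_map, Csum_pm; cbn [shift].
    change (fun j => if in_block N1 k l j then ?e / INR k else 0) with (block_shift N1 k l e).
    rewrite !proj_block_shift, !tval_Mbar_block_term, <- Csum_block_Cif_Mcoef by lia.
    apply Csum_ext; intros p Hp; apply in_seq in Hp; rewrite map_map, Csum_pm; cbn [shift].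
    rewrite !proj_eshift_block, !tval_M_term by lia; reflexivity.
Qed.

End Restriction.

(** * A point of [D_0] where every coefficient is defined *)

Lemma M_op_defined_of n t1 tn (x : nat -> CC) :
  (forall i e, (1 <= i <= n)%nat -> e = 1 \/ e = -1 ->
     apart x n i (Cmul (CofR e) (x i)) /\ Cexp (Cmul (CofR e) (x i)) <> C1) ->
  Forall tdefined (M_op n t1 tn x).
Proof.
  intros H; apply Forall_forall; intros t Ht; unfold M_op in Ht.
  apply in_flat_map in Ht; destruct Ht as (i & Hi & Ht); apply in_seq in Hi.
  cbn [map In] in Ht; destruct Ht as [<- | [<- | []]];
    [destruct (H i 1 ltac:(lia) ltac:(auto)) as [Hap Hu] | destruct (H i (-1) ltac:(lia) ltac:(auto)) as [Hap Hu]];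
    (unfold tdefined; cbn [facs]; apply Forall_app; split;
     [ apply Forall_forall; intros f Hf; apply in_flat_map in Hf; destruct Hf as (j & Hj & Hf);
       apply filter_In in Hj; destruct Hj as [Hj Hji]; apply Bool.negb_true_iff, Nat.eqb_neq in Hji;
       destruct (Hap j Hj Hji) as [H1 H2];
       cbn [In] in Hf; destruct Hf as [<- | [<- | []]]; cbv beta iota; apply gden_C1_neq0; assumption
     | constructor; [cbv beta iota; apply gden_C1_neq0; exact Hu | constructor] ]).
Qed.

Lemma Mbar_op_defined_of N1 k m n q t1 sq st1 tn (x : nat -> CC) :
  (forall i e, (1 <= i <= N1)%nat -> e = 1 \/ e = -1 ->
     (forall j, (1 <= j <= N1)%nat -> j <> i ->
        gden (Csub (Cmul (CofR e) (x i)) (x j)) C1 <> C0 /\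
        gden (Cadd (Cmul (CofR e) (x i)) (x j)) C1 <> C0) /\
     (forall l, (1 <= l <= m)%nat ->
        gden (Csub (Cmul (CofR e) (x i)) (ycoord N1 k x l)) (Cmul (Cinv sq) st1) <> C0 /\
        gden (Cadd (Cmul (CofR e) (x i)) (ycoord N1 k x l)) (Cmul (Cinv sq) st1) <> C0) /\
     gden (Cmul (CofR e) (x i)) C1 <> C0) ->
  (forall l e, (1 <= l <= m)%nat -> e = 1 \/ e = -1 ->
     (forall j, (1 <= j <= N1)%nat ->
        gden (Csub (Cmul (CofR e) (ycoord N1 k x l)) (x j)) (Cmul sq (Cinv st1)) <> C0 /\
        gden (Cadd (Cmul (CofR e) (ycoord N1 k x l)) (x j)) (Cmul sq (Cinv st1)) <> C0) /\
     (forall l', (1 <= l' <= m)%nat -> l' <> l ->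
        gden (Csub (Cmul (CofR e) (ycoord N1 k x l)) (ycoord N1 k x l')) C1 <> C0 /\
        gden (Cadd (Cmul (CofR e) (ycoord N1 k x l)) (ycoord N1 k x l')) C1 <> C0) /\
     gden (Cmul (CofR e) (ycoord N1 k x l)) (Cmul sq (Cinv st1)) <> C0 /\
     gden (Cmul (CofR (2 * e)) (ycoord N1 k x l)) C1 <> C0) ->
  Forall tdefined (Mbar_op N1 k m n q t1 sq st1 tn x).
Proof.
  intros Hfree Hblock; unfold Mbar_op; cbv zeta; apply Forall_app; split;
    apply Forall_forall; intros t Ht; apply in_flat_map in Ht;
    destruct Ht as (i & Hi & Ht); apply in_seq in Hi;
    cbn [map In] in Ht; destruct Ht as [<- | [<- | []]].
  1: destruct (Hfree i 1 ltac:(lia) ltac:(auto)) as (Hxx & Hxy & Hx).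
  2: destruct (Hfree i (-1) ltac:(lia) ltac:(auto)) as (Hxx & Hxy & Hx).
  3: destruct (Hblock i 1 ltac:(lia) ltac:(auto)) as (Hyx & Hyy & Hy & Hy2).
  4: destruct (Hblock i (-1) ltac:(lia) ltac:(auto)) as (Hyx & Hyy & Hy & Hy2).
  all: unfold tdefined; cbn [facs]; rewrite !Forall_app; repeat split.
  all: apply Forall_forall; intros f Hf.
  all: try (apply in_flat_map in Hf; destruct Hf as (j & Hj & Hf)).
  all: try (apply filter_In in Hj; destruct Hj as [Hj Hji]; apply Bool.negb_true_iff, Nat.eqb_neq in Hji).
  all: try (apply in_seq in Hj).
  all: cbn [In] in Hf; repeat (destruct Hf as [<- | Hf]; [|]); try contradiction.
  all: first [ apply Hxx; lia | apply Hxy; lia | apply Hyx; lia | apply Hyy; lia | assumption ].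
Qed.

Definition near (T d : R) (P : nat) (z : CC) : Prop := Rabs (fst z - T * INR P) <= d.
Definition far (T d : R) (z : CC) : Prop := T - 2 * d <= Rabs (fst z).

Section Separation.
Variables (T d : R).
Hypotheses (HT : T = 4 * d + 1) (Hd : 0 <= d).

Lemma far_pair a b Pa Pb e : (Pa <> Pb)%nat -> near T d Pa a -> near T d Pb b -> e = 1 \/ e = -1 ->
  far T d (Csub (Cmul (CofR e) a) b) /\ far T d (Cadd (Cmul (CofR e) a) b).
Proof.
  unfold near, far; intros HP Ha Hb He.
  assert (HPab : INR Pa >= INR Pb + 1 \/ INR Pb >= INR Pa + 1).
  { destruct (Nat.lt_ge_cases Pa Pb); [right | left]; rewrite <- S_INR; apply Rle_ge, le_INR; lia. }
  assert (0 <= INR Pa) by apply pos_INR; assert (0 <= INR Pb) by apply pos_INR.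
  assert (HT' : T * INR Pa >= T * INR Pb + T \/ T * INR Pb >= T * INR Pa + T)
    by (destruct HPab; [left | right]; nra).
  assert (0 <= T * INR Pa) by nra; assert (0 <= T * INR Pb) by nra.
  destruct a as [a1 a2], b as [b1 b2]; cbn [fst] in *.
  destruct He as [-> | ->]; unfold Csub, Cadd, Copp, Cmul, CofR; cbn [fst snd];
    revert Ha Hb; unfold Rabs; repeat destruct Rcase_abs; intros; split; lra.
Qed.

Lemma far_same_center a b P : (1 <= P)%nat -> near T d P a -> near T d P b -> far T d (Cadd a b).
Proof.
  unfold near, far; intros HP Ha Hb.
  assert (1 <= INR P) by (apply (le_INR 1); lia); assert (T <= T * INR P) by nra.
  destruct a as [a1 a2], b as [b1 b2]; cbn [fst] in *; unfold Cadd; cbn [fst].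
  revert Ha Hb; unfold Rabs; repeat destruct Rcase_abs; intros; lra.
Qed.

Lemma far_single a P e : (1 <= P)%nat -> near T d P a -> e = 1 \/ e = -1 ->
  far T d (Cmul (CofR e) a) /\ far T d (Cmul (CofR (2 * e)) a).
Proof.
  unfold near, far; intros HP Ha He.
  assert (1 <= INR P) by (apply (le_INR 1); lia); assert (T <= T * INR P) by nra.
  destruct a as [a1 a2]; cbn [fst] in *; unfold Cmul, CofR; cbn [fst snd].
  destruct He as [-> | ->]; revert Ha; unfold Rabs; repeat destruct Rcase_abs; intros; split; lra.
Qed.

Lemma gden_C1_far z : far T d z -> gden z C1 <> C0.
Proof.
  unfold far; intro H; apply gden_C1_neq0, Cexp_neq1; intro E.
  rewrite E, Rabs_R0 in H; lra.
Qed.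

Lemma gden_epow_far et z c : far T d z -> Rabs (2 * c * fst et) <= d -> gden z (epow et c) <> C0.
Proof.
  unfold far, gden; intros H Hc.
  replace (Csub (Cmul (epow et c) (Cexp z)) (Cinv (epow et c)))
    with (Cmul (Cinv (epow et c)) (Csub (Cexp (Cshift et (Cshift et z c) c)) C1))
    by (rewrite !Cexp_Cshift; pose proof (epow_neq0 et c); field; assumption).
  apply Cmul_neq0; [apply Cinv_neq0, epow_neq0 |].
  apply Csub_C1_neq0, Cexp_neq1; destruct z, et; unfold Cshift, Cadd, Cmul, CofR; cbn [fst snd].
  cbn [fst] in *; revert H Hc; unfold Rabs; repeat destruct Rcase_abs; intros; lra.
Qed.

End Separation.

(* Free coordinates sit at [T j]; block [l] is an arithmetic progression of step [-eta1]
   centred at [T (N1 + l)].  For [T] large compared with [Re eta1], every argument of [g] is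
   then either far from the imaginary axis or a non-zero multiple of [eta1]. *)
Definition lattice_point (et : CC) (k N1 : nat) (T : R) (j : nat) : CC :=
  if (j <=? N1)%nat then CofR (T * INR j)
  else Cshift et (CofR (T * INR (N1 + block_of N1 k j)))
         ((INR k + 1) / 2 - INR (j - N1 - k * (block_of N1 k j - 1))).

Definition lattice_center (N1 k j : nat) : nat :=
  if (j <=? N1)%nat then j else (N1 + block_of N1 k j)%nat.

Section Lattice.
Variables (et : CC) (k N1 m : nat) (T : R).
Hypothesis Hk : (1 <= k)%nat.
Local Notation x := (lattice_point et k N1 T).

Lemma lattice_point_block l p : (1 <= l)%nat -> (1 <= p <= k)%nat ->
  x (N1 + k * (l - 1) + p) = Cshift et (CofR (T * INR (N1 + l))) ((INR k + 1) / 2 - INR p).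
Proof.
  intros Hl Hp; unfold lattice_point.
  replace ((N1 + k * (l - 1) + p) <=? N1)%nat with false by (symmetry; apply Nat.leb_gt; nia).
  rewrite block_of_index by lia; do 3 f_equal; nia.
Qed.

Lemma lattice_center_block l p : (1 <= l)%nat -> (1 <= p <= k)%nat ->
  lattice_center N1 k (N1 + k * (l - 1) + p) = (N1 + l)%nat.
Proof.
  intros Hl Hp; unfold lattice_center.
  replace ((N1 + k * (l - 1) + p) <=? N1)%nat with false by (symmetry; apply Nat.leb_gt; nia).
  rewrite block_of_index by lia; reflexivity.
Qed.

Lemma lattice_inD0 : inD0 N1 k m et x.
Proof.
  intros l j Hl Hj.
  replace (N1 + k * (l - 1) + j + 1)%nat with (N1 + k * (l - 1) + (j + 1))%nat by lia.
  rewrite !lattice_point_block, (plus_INR j 1) by lia.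
  unfold Cshift; change (INR 1) with 1; CC_ext; ring.
Qed.

Lemma lattice_ycoord l : (1 <= l <= m)%nat -> ycoord N1 k x l = CofR (T * INR (N1 + l)).
Proof.
  intros Hl; rewrite (ycoord_block_first et k N1 m x Hk lattice_inD0) by exact Hl.
  rewrite lattice_point_block by lia; unfold Cshift; change (INR 1) with 1; CC_ext; field.
Qed.

Lemma lattice_same_center i j : (1 <= i)%nat -> (1 <= j)%nat ->
  lattice_center N1 k i = lattice_center N1 k j -> i <> j ->
  exists a b : nat, a <> b /\ Csub (x i) (x j) = Cmul (CofR (INR a - INR b)) et.
Proof.
  intros Hi Hj HP Hij.
  destruct (Nat.le_gt_cases i N1) as [HiN | HiN], (Nat.le_gt_cases j N1) as [HjN | HjN].
  - unfold lattice_center in HP.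
    rewrite (proj2 (Nat.leb_le i N1)), (proj2 (Nat.leb_le j N1)) in HP by lia; lia.
  - destruct (block_index_exists N1 k j Hk HjN) as (l & p & Hl & Hp & ->).
    rewrite lattice_center_block in HP by lia; unfold lattice_center in HP.
    rewrite (proj2 (Nat.leb_le i N1)) in HP by lia; lia.
  - destruct (block_index_exists N1 k i Hk HiN) as (l & p & Hl & Hp & ->).
    rewrite lattice_center_block in HP by lia; unfold lattice_center in HP.
    rewrite (proj2 (Nat.leb_le j N1)) in HP by lia; lia.
  - destruct (block_index_exists N1 k i Hk HiN) as (l & p & Hl & Hp & ->).
    destruct (block_index_exists N1 k j Hk HjN) as (l' & p' & Hl' & Hp' & ->).
    rewrite !lattice_center_block in HP by lia; assert (l = l') by lia; subst l'.
    exists p', p; split; [intro; subst; lia|].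
    rewrite !lattice_point_block by lia; unfold Cshift; CC_ext; ring.
Qed.

Variable d : R.
Hypotheses (Hd : d = INR k * Rabs (fst et)) (HT : T = 4 * d + 1).

Lemma lattice_d_nonneg : 0 <= d.
Proof. rewrite Hd; apply Rmult_le_pos; [apply pos_INR | apply Rabs_pos]. Qed.

Lemma lattice_point_near j : (1 <= j)%nat ->
  near T d (lattice_center N1 k j) (x j) /\ (1 <= lattice_center N1 k j)%nat.
Proof.
  intros Hj; unfold near.
  assert (0 <= Rabs (fst et)) by apply Rabs_pos; assert (1 <= INR k) by (apply (le_INR 1); lia).
  destruct (Nat.le_gt_cases j N1) as [HjN | HjN].
  - unfold lattice_point, lattice_center.
    replace (j <=? N1)%nat with true by (symmetry; apply Nat.leb_le; lia).
    split; [|lia]; cbn [fst CofR]; rewrite Rminus_diag, Rabs_R0, Hd; nra.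
  - destruct (block_index_exists N1 k j Hk HjN) as (l & p & Hl & Hp & ->).
    rewrite lattice_point_block, lattice_center_block by lia; split; [|lia].
    rewrite Hd; destruct et as [a b]; unfold Cshift, Cadd, Cmul, CofR; cbn [fst snd] in *.
    replace (T * INR (N1 + l) + (((INR k + 1) / 2 - INR p) * a - 0 * b) - T * INR (N1 + l))
      with (((INR k + 1) / 2 - INR p) * a) by ring.
    rewrite Rabs_mult; apply Rmult_le_compat_r; [assumption|].
    assert (1 <= INR p <= INR k) by (split; [apply (le_INR 1) | apply le_INR]; lia).
    unfold Rabs; destruct Rcase_abs; lra.
Qed.

Lemma lattice_ycoord_near l : (1 <= l <= m)%nat -> near T d (N1 + l) (ycoord N1 k x l).
Proof.
  intros Hl; unfold near; rewrite lattice_ycoord by exact Hl; cbn [fst CofR].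
  rewrite Rminus_diag, Rabs_R0; apply lattice_d_nonneg.
Qed.

Hypothesis Hnt : forall r, (1 <= r)%nat -> epow et (INR r) <> C1.

Lemma epow_diff_neq1 a b : a <> b -> Cexp (Cmul (CofR (INR a - INR b)) et) <> C1.
Proof.
  intros Hab; fold (epow et (INR a - INR b)).
  destruct (Nat.lt_ge_cases b a).
  - rewrite <- minus_INR by lia; apply Hnt; lia.
  - replace (INR a - INR b) with (- INR (b - a)) by (rewrite minus_INR by lia; ring).
    rewrite epow_opp; intro E; apply (Hnt (b - a)%nat ltac:(lia)).
    replace (epow et (INR (b - a))) with (Cinv (Cinv (epow et (INR (b - a)))))
      by (pose proof (epow_neq0 et (INR (b - a))); field; split; [assumption | exact C1_neq_C0]).
    rewrite E; apply Cinv_C1.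
Qed.

Lemma lattice_pair i j e : (1 <= i)%nat -> (1 <= j)%nat -> i <> j -> e = 1 \/ e = -1 ->
  gden (Csub (Cmul (CofR e) (x i)) (x j)) C1 <> C0 /\
  gden (Cadd (Cmul (CofR e) (x i)) (x j)) C1 <> C0.
Proof.
  intros Hi Hj Hij He.
  pose proof lattice_d_nonneg as Hd0.
  destruct (lattice_point_near i Hi) as [Ni Pi], (lattice_point_near j Hj) as [Nj Pj].
  destruct (Nat.eq_dec (lattice_center N1 k i) (lattice_center N1 k j)) as [HP | HP].
  - destruct (lattice_same_center i j Hi Hj HP Hij) as (a & b & Hab & E).
    rewrite HP in Ni; pose proof (far_same_center T d HT Hd0 _ _ _ Pj Ni Nj) as F.
    assert (F' : far T d (Csub (Cmul (CofR (-1)) (x i)) (x j))).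
    { unfold far in *; replace (fst (Csub (Cmul (CofR (-1)) (x i)) (x j)))
        with (- fst (Cadd (x i) (x j))) by (unfold Csub, Cadd, Copp, Cmul, CofR; cbn; ring).
      rewrite Rabs_Ropp; exact F. }
    destruct He as [-> | ->]; split; try (apply (gden_C1_far T d HT Hd0); assumption).
    + replace (Csub (Cmul (CofR 1) (x i)) (x j)) with (Csub (x i) (x j)) by (CC_ext; ring).
      rewrite E; apply gden_C1_neq0, epow_diff_neq1; exact Hab.
    + replace (Cadd (Cmul (CofR 1) (x i)) (x j)) with (Cadd (x i) (x j)) by (CC_ext; ring).
      apply (gden_C1_far T d HT Hd0); exact F.
    + replace (Cadd (Cmul (CofR (-1)) (x i)) (x j)) with (Cmul (CofR (INR b - INR a)) et).
      * apply gden_C1_neq0, epow_diff_neq1; auto.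
      * revert E; destruct (x i), (x j), et; unfold Csub, Cadd, Copp, Cmul, CofR; cbn.
        intro E; injection E as E1 E2; apply CC_eq; cbn; lra.
  - destruct (far_pair T d HT Hd0 _ _ _ _ e HP Ni Nj He) as [F1 F2].
    split; apply (gden_C1_far T d HT Hd0); assumption.
Qed.

Lemma lattice_single i e : (1 <= i)%nat -> e = 1 \/ e = -1 ->
  gden (Cmul (CofR e) (x i)) C1 <> C0.
Proof.
  intros Hi He; destruct (lattice_point_near i Hi) as [Ni Pi].
  apply (gden_C1_far T d HT lattice_d_nonneg), (far_single T d HT lattice_d_nonneg _ _ e Pi Ni He).
Qed.

Lemma lattice_shift_bound c : c = (1 - INR k) / 4 \/ c = (INR k - 1) / 4 ->
  Rabs (2 * c * fst et) <= d.
Proof.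
  intros Hc; assert (1 <= INR k) by (apply (le_INR 1); lia).
  rewrite Hd, !Rabs_mult; apply Rmult_le_compat_r; [apply Rabs_pos|].
  rewrite Rabs_right by lra; destruct Hc as [-> | ->]; unfold Rabs; destruct Rcase_abs; lra.
Qed.

Lemma lattice_free_block i l e : (1 <= i <= N1)%nat -> (1 <= l <= m)%nat -> e = 1 \/ e = -1 ->
  gden (Csub (Cmul (CofR e) (x i)) (ycoord N1 k x l)) (epow et ((1 - INR k) / 4)) <> C0 /\
  gden (Cadd (Cmul (CofR e) (x i)) (ycoord N1 k x l)) (epow et ((1 - INR k) / 4)) <> C0.
Proof.
  intros Hi Hl He; destruct (lattice_point_near i ltac:(lia)) as [Ni _].
  unfold lattice_center in Ni; rewrite (proj2 (Nat.leb_le i N1)) in Ni by lia.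
  destruct (far_pair T d HT lattice_d_nonneg _ _ i (N1 + l) e ltac:(lia) Ni
              (lattice_ycoord_near l Hl) He) as [F1 F2].
  split; apply (gden_epow_far T d HT); auto using lattice_shift_bound.
Qed.

Lemma lattice_block_free l j e : (1 <= l <= m)%nat -> (1 <= j <= N1)%nat -> e = 1 \/ e = -1 ->
  gden (Csub (Cmul (CofR e) (ycoord N1 k x l)) (x j)) (epow et ((INR k - 1) / 4)) <> C0 /\
  gden (Cadd (Cmul (CofR e) (ycoord N1 k x l)) (x j)) (epow et ((INR k - 1) / 4)) <> C0.
Proof.
  intros Hl Hj He; destruct (lattice_point_near j ltac:(lia)) as [Nj _].
  unfold lattice_center in Nj; rewrite (proj2 (Nat.leb_le j N1)) in Nj by lia.
  destruct (far_pair T d HT lattice_d_nonneg _ _ (N1 + l) j e ltac:(lia)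
              (lattice_ycoord_near l Hl) Nj He) as [F1 F2].
  split; apply (gden_epow_far T d HT); auto using lattice_shift_bound.
Qed.

Lemma lattice_block_block l l' e : (1 <= l <= m)%nat -> (1 <= l' <= m)%nat -> l' <> l ->
  e = 1 \/ e = -1 ->
  gden (Csub (Cmul (CofR e) (ycoord N1 k x l)) (ycoord N1 k x l')) C1 <> C0 /\
  gden (Cadd (Cmul (CofR e) (ycoord N1 k x l)) (ycoord N1 k x l')) C1 <> C0.
Proof.
  intros Hl Hl' Hne He.
  destruct (far_pair T d HT lattice_d_nonneg _ _ (N1 + l) (N1 + l') e ltac:(lia)
              (lattice_ycoord_near l Hl) (lattice_ycoord_near l' Hl') He) as [F1 F2].
  split; apply (gden_C1_far T d HT lattice_d_nonneg); assumption.
Qed.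

Lemma lattice_block_single l e : (1 <= l <= m)%nat -> e = 1 \/ e = -1 ->
  gden (Cmul (CofR e) (ycoord N1 k x l)) (epow et ((INR k - 1) / 4)) <> C0 /\
  gden (Cmul (CofR (2 * e)) (ycoord N1 k x l)) C1 <> C0.
Proof.
  intros Hl He.
  destruct (far_single T d HT lattice_d_nonneg _ (N1 + l) e ltac:(lia) (lattice_ycoord_near l Hl) He)
    as [F1 F2].
  split; [apply (gden_epow_far T d HT); auto using lattice_shift_bound
         | apply (gden_C1_far T d HT lattice_d_nonneg); exact F2].
Qed.

Lemma lattice_M_op_defined tn : Forall tdefined (M_op (N1 + m * k) (epow et (/ 2)) tn x).
Proof.
  apply M_op_defined_of; intros i e Hi He; split.
  - intros j Hj Hji; apply in_seq in Hj.
    destruct (lattice_pair i j e ltac:(lia) ltac:(lia) ltac:(lia) He) as [H1 H2].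
    split; apply gden_C1_neq0; assumption.
  - apply gden_C1_neq0, lattice_single; [lia | exact He].
Qed.

Lemma lattice_Mbar_op_defined tn :
  Forall tdefined (Mbar_op N1 k m (N1 + m * k) (epow et (INR k / 2)) (epow et (/ 2))
                           (epow et (INR k / 4)) (epow et (/ 4)) tn x).
Proof.
  assert (E1 : Cmul (Cinv (epow et (INR k / 4))) (epow et (/ 4)) = epow et ((1 - INR k) / 4))
    by (rewrite <- epow_opp, <- epow_add; f_equal; field).
  assert (E2 : Cmul (epow et (INR k / 4)) (Cinv (epow et (/ 4))) = epow et ((INR k - 1) / 4))
    by (rewrite <- epow_sub; f_equal; field).
  apply Mbar_op_defined_of; rewrite ?E1, ?E2.
  - intros i e Hi He; split; [|split].
    + intros j Hj Hji; apply lattice_pair; auto; lia.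
    + intros l Hl; apply lattice_free_block; auto.
    + apply lattice_single; [lia | exact He].
  - intros l e Hl He; split; [|split].
    + intros j Hj; apply lattice_block_free; auto.
    + intros l' Hl' Hne; apply lattice_block_block; auto.
    + apply lattice_block_single; auto.
Qed.

End Lattice.

Lemma not_in_piiQ_epow_neq1 hbar et k : not_in_piiQ hbar -> hbar = Cmul (Cnat k) et ->
  forall r, (1 <= r)%nat -> epow et (INR r) <> C1.
Proof.
  intros Hpi Hh r Hr E; apply Cexp_eq1 in E; destruct E as [p Hp]; apply Hpi.
  exists (Z.of_nat k * p)%Z, (Z.of_nat r); split; [lia|].
  subst hbar; destruct et as [a b]; unfold Cnat, Cmul, CofR in *; cbn [fst snd] in *.
  injection Hp as H1 H2; rewrite mult_IZR, <- !INR_IZR_INZ; apply CC_eq; cbn [fst snd].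
  - replace ((INR k * a - 0 * b) * INR r - (INR k * b + 0 * a) * 0)
      with (INR k * (INR r * a - 0 * b)) by ring.
    rewrite H1; ring.
  - replace ((INR k * a - 0 * b) * 0 + (INR k * b + 0 * a) * INR r)
      with (INR k * (INR r * b + 0 * a)) by ring.
    rewrite H2; ring.
Qed.

Theorem mainTheorem16 (n k m : nat) (hbar eta1 tn : CC) :
  (1 <= k)%nat -> (m * k <= n)%nat ->
  not_in_piiQ hbar ->
  hbar = Cmul (Cnat k) eta1 ->
  tn <> C0 ->
  let N1 := (n - m * k)%nat in
  let t1 := Cexp (Cmul (CofR (/ 2)) eta1) in
  let q := Cexp (Cmul (CofR (/ 2)) hbar) in
  let sq := Cexp (Cmul (CofR (/ 4)) hbar) in
  let st1 := Cexp (Cmul (CofR (/ 4)) eta1) in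
  (exists x, inD0 N1 k m eta1 x /\
     Forall tdefined (M_op n t1 tn x) /\
     Forall tdefined (Mbar_op N1 k m n q t1 sq st1 tn x)) /\
  (forall x, inD0 N1 k m eta1 x ->
     Forall tdefined (M_op n t1 tn x) ->
     Forall tdefined (Mbar_op N1 k m n q t1 sq st1 tn x) ->
     forall lam : nat -> R,
       restr_coef N1 k n (M_op n t1 tn x) lam x =
       restr_coef N1 k n (Mbar_op N1 k m n q t1 sq st1 tn x) lam x).
Proof.
  intros Hk Hmk Hpi Hh Htn N1 t1 q sq st1.
  assert (En : n = (N1 + m * k)%nat) by (unfold N1; lia).
  assert (Eq : q = epow eta1 (INR k / 2))
    by (unfold q, epow; rewrite Hh; f_equal; unfold Cnat; CC_ext; field).
  assert (Esq : sq = epow eta1 (INR k / 4))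
    by (unfold sq, epow; rewrite Hh; f_equal; unfold Cnat; CC_ext; field).
  change t1 with (epow eta1 (/ 2)) in *; change st1 with (epow eta1 (/ 4)) in *.
  clearbody N1 q sq; subst n q sq.
  pose proof (not_in_piiQ_epow_neq1 hbar eta1 k Hpi Hh) as Hnt.
  split.
  - set (d := INR k * Rabs (fst eta1)).
    exists (lattice_point eta1 k N1 (4 * d + 1)); repeat split.
    + apply lattice_inD0; exact Hk.
    + apply lattice_M_op_defined with (d := d); auto.
    + apply lattice_Mbar_op_defined with (d := d); auto.
  - intros x HD HM HMb lam; apply restr_coef_M_Mbar; auto.
Qed.
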